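(* Let $z$ lie in a sufficiently small neighborhood of $\tfrac12$ and consider the germ in $Q$ $$H(Q)=\frac{1}{(w_1-w_0)(w_1-w_2)}(Q).$$ Then the only singular point of $H$ (among the possible singular points $Q_\pm(z)$) is $Q_+(z)$; $H$ is regular at $Q_-(z)$, and at $Q_+(z)$ it has an integrable singularity with two branches (continuing twice around $Q_+$ returns $H$).
   Context: $Q(w)=w(w-1)(w-z)$. Critical points $w_\pm(z)=\frac13(z+1)\pm\frac13(z^2-z+1)^{1/2}$ (principal root), critical values $Q_\pm(z)=Q(w_\pm(z))\approx\mp\frac{\sqrt3}{36}$. With $u=\frac{3z-(z+1)^2}{3}$, $v=\frac1{27}\big(-2(z+1)^3+9z(z+1)-27Q\big)$ and principal branches, $w_k(Q,z)=\frac{z+1}{3}+2\left(-\frac u3\right)^{1/2}\cos\!\Big(\frac13\arccos\Big(\frac{3v}{2u}\big(-\frac3u\big)^{1/2}\Big)+\theta_k\Big)$, $\theta_0=\frac{2\pi}3,\theta_1=0,\theta_2=-\frac{2\pi}3$: the three roots of $w(w-1)(w-z)=Q$, holomorphic near $(Q,z)=(0,\frac12)$ with $w_0(0,z)=0,w_1(0,z)=1,w_2(0,z)=z$, continued analytically in $Q$. *)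

From Stdlib Require Import Reals.
From Coquelicot Require Import Coquelicot.
Open Scope C_scope.

Definition Pz (z w : C) : C := w * (w - 1) * (w - z).

(** Principal complex square root (branch cut on the negative real axis,
    Re >= 0, and Im(sqrt x) >= 0 when x is real negative). *)
Definition Csqrt (x : C) : C :=
  (sqrt ((Cmod x + Re x) / 2),
   (if Rlt_dec (Im x) 0 then (-1)%R else 1%R) * sqrt ((Cmod x - Re x) / 2))%R.

(** Critical points w_pm(z) = (z+1)/3 +- (1/3) (z^2 - z + 1)^(1/2). *)
Definition w_plus (z : C) : C := (z + 1) / 3 + Csqrt (z * z - z + 1) / 3.
Definition w_minus (z : C) : C := (z + 1) / 3 - Csqrt (z * z - z + 1) / 3.

Definition Q_plus (z : C) : C := Pz z (w_plus z).
Definition Q_minus (z : C) : C := Pz z (w_minus z).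

Definition Cdisc (c : C) (r : R) (x : C) : Prop := (Cmod (x - c) < r)%R.

Definition holo_on (U : C -> Prop) (f : C -> C) : Prop :=
  forall x, U x -> ex_derive (K := C_AbsRing) (V := C_NormedModule) f x.

Definition Copen (U : C -> Prop) : Prop :=
  forall x, U x -> exists e : R, (0 < e)%R /\ forall y, Cdisc x e y -> U y.

Definition Cconvex (U : C -> Prop) : Prop :=
  forall x y (t : R), U x -> U y -> (0 <= t <= 1)%R -> U (x + RtoC t * (y - x)).

Definition root_germ (z : C) (rho : R) (c : C) (w : C -> C) : Prop :=
  holo_on (Cdisc 0 rho) w /\
  (forall Q, Cdisc 0 rho Q -> Pz z (w Q) = Q) /\
  w 0 = c.

Definition continues_germ (U : C -> Prop) (F H : C -> C) : Prop :=
  U 0 /\ Copen U /\ holo_on U F /\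
  exists e : R, (0 < e)%R /\ forall Q, Cdisc 0 e Q -> U Q /\ F Q = H Q.

From Stdlib Require Import Reals Lra Psatz ClassicalEpsilon.
From Coquelicot Require Import Coquelicot.
Open Scope C_scope.

(* For small Q the germs w0, w1, w2 are the three distinct roots of Pz z w = Q, so
   Pz z w - Q = (w - w0)(w - w1)(w - w2) and H = 1 / Pz'(w1): H continues along any path on
   which w1 continues as a simple root.

   Near z = 1/2 the root starting at 1 stays, for Q in a disc containing 0 and Q_-(z), in a
   ball on which Pz z is injective; a contraction argument makes it a holomorphic function of Q
   there, so H is regular at Q_-(z).

   At Q_+(z) the roots starting at 1 and at z collide at w_+(z), while the root g starting at 0
   stays simple. The other two roots are (z + 1 - g +- d) / 2, where d^2 is the discriminant of
   (Pz z w - Q) / (w - g); this discriminant factors as (Q - Q_+) times a function that is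
   holomorphic and nonzero at Q_+. So w1 = (z + 1 - g + s k) / 2 with s^2 = Q - Q_+ and k
   holomorphic, and 1 / Pz'(w1) = A + B / s with A, B holomorphic and B(Q_+) <> 0. *)

Lemma Im_le_Cmod (c : C) : (Rabs (Im c) <= Cmod c)%R.
Proof. eapply Rle_trans; [apply Rmax_r | apply Rmax_Cmod]. Qed.

Lemma Cmod_le_Re_Im (c : C) : (Cmod c <= Rabs (Re c) + Rabs (Im c))%R.
Proof.
  destruct c as [a b]; unfold Cmod; simpl.
  rewrite <- (sqrt_Rsqr (Rabs a + Rabs b)) by (pose proof (Rabs_pos a); pose proof (Rabs_pos b); lra).
  apply sqrt_le_1_alt. pose proof (Rsqr_abs a). pose proof (Rsqr_abs b).
  pose proof (Rabs_pos a). pose proof (Rabs_pos b). unfold Rsqr in *. nra.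
Qed.

Lemma Cmod_sub_le (a b : C) : (Cmod (a - b) <= Cmod a + Cmod b)%R.
Proof. rewrite <- (Cmod_opp b). apply Cmod_triangle. Qed.

Lemma Cmult_integral (a b : C) : a * b = 0 -> a = 0 \/ b = 0.
Proof.
  intros E. destruct (Ceq_dec a 0) as [Ha | Ha]; [now left | right].
  rewrite <- (Cmult_1_l b), <- (Cinv_l a Ha), <- Cmult_assoc, E. apply Cmult_0_r.
Qed.

Lemma RtoC_neq_0 (r : R) : r <> 0%R -> RtoC r <> 0.
Proof. intros H E. apply H. exact (f_equal fst E). Qed.

Lemma Re_Cmod_lower (c : C) : (Re c <= Cmod c)%R.
Proof. pose proof (re_le_Cmod c). pose proof (Rle_abs (Re c)). lra. Qed.

Lemma Csqrt_sq (x : C) : Csqrt x * Csqrt x = x.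
Proof.
  destruct x as [r i]; unfold Csqrt; simpl.
  set (m := Cmod (r, i)).
  assert (Hm2 : (m * m = r * r + i * i)%R).
  { unfold m, Cmod; simpl. rewrite sqrt_sqrt; [ring | nra]. }
  assert (Hr : (Rabs r <= m)%R) by apply (re_le_Cmod (r, i)).
  pose proof (Rle_abs r). pose proof (Rle_abs (- r)). rewrite Rabs_Ropp in *.
  assert (HA : (sqrt ((m + r) / 2) * sqrt ((m + r) / 2) = (m + r) / 2)%R) by (apply sqrt_sqrt; lra).
  assert (HB : (sqrt ((m - r) / 2) * sqrt ((m - r) / 2) = (m - r) / 2)%R) by (apply sqrt_sqrt; lra).
  assert (HAB : (sqrt ((m + r) / 2) * sqrt ((m - r) / 2) = Rabs i / 2)%R).
  { rewrite <- sqrt_mult by lra. rewrite <- (sqrt_Rsqr (Rabs i / 2)) by (pose proof (Rabs_pos i); lra).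
    f_equal. unfold Rsqr. replace (Rabs i / 2 * (Rabs i / 2))%R with (Rabs i * Rabs i / 4)%R by field.
    rewrite <- Rabs_mult, Rabs_right by nra. nra. }
  unfold Cmult; simpl. f_equal; destruct (Rlt_dec i 0).
  - nra.
  - nra.
  - rewrite Rabs_left in HAB by lra. nra.
  - rewrite Rabs_right in HAB by lra. nra.
Qed.

Lemma Csqrt_Re_nonneg (x : C) : (0 <= Re (Csqrt x))%R.
Proof. apply sqrt_pos. Qed.

Lemma Csqrt_Re_pos (x : C) : (0 < Re x)%R -> (0 < Re (Csqrt x))%R.
Proof. intros H. apply sqrt_lt_R0. pose proof (Re_Cmod_lower x). unfold Re in *. lra. Qed.

Lemma Csqrt_neq_0 (x : C) : (0 < Re x)%R -> Csqrt x <> 0.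
Proof. intros H E. pose proof (Csqrt_Re_pos x H) as Hpos. rewrite E in Hpos. simpl in Hpos. lra. Qed.

(* From [x - x0 = (Csqrt x - Csqrt x0) (Csqrt x + Csqrt x0)], as both roots lie in [Re >= 0]. *)
Lemma Csqrt_lipschitz (x x0 : C) : (0 < Re (Csqrt x0))%R ->
  (Cmod (Csqrt x - Csqrt x0) * Re (Csqrt x0) <= Cmod (x - x0))%R.
Proof.
  intros H.
  assert (E : x - x0 = (Csqrt x - Csqrt x0) * (Csqrt x + Csqrt x0)).
  { rewrite <- (Csqrt_sq x) at 1. rewrite <- (Csqrt_sq x0) at 1. ring. }
  assert (Hsum : (Re (Csqrt x0) <= Cmod (Csqrt x + Csqrt x0))%R).
  { eapply Rle_trans; [| apply Re_Cmod_lower].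
    change (Re (Csqrt x + Csqrt x0)) with (Re (Csqrt x) + Re (Csqrt x0))%R.
    pose proof (Csqrt_Re_nonneg x). lra. }
  rewrite E, Cmod_mult. apply Rmult_le_compat_l; [apply Cmod_ge_0 | exact Hsum].
Qed.

Lemma Re_div_pos (a b : C) : (0 < Re a * Re b + Im a * Im b)%R -> (0 < Re (a / b))%R.
Proof.
  destruct a as [a1 a2], b as [b1 b2]. simpl. intros H.
  assert (Hn : (0 < b1 * b1 + b2 * b2)%R).
  { destruct (Req_dec b1 0); destruct (Req_dec b2 0); subst; nra. }
  unfold Cinv, Cmult; simpl.
  match goal with |- (0 < ?X)%R =>
    replace X with ((a1 * b1 + a2 * b2) / (b1 * b1 + b2 * b2))%R by (field; lra) end.
  now apply Rdiv_lt_0_compat.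
Qed.

Lemma Cconj_neq_0 (a : C) : a <> 0 -> Cconj a <> 0.
Proof. intros H E. apply H. rewrite <- (Cconj_conj a), E. apply injective_projections; simpl; ring. Qed.

Lemma Cinv_neq_0 (a : C) : a <> 0 -> / a <> 0.
Proof. intros H E. apply C1_nz. rewrite <- (Cinv_r a H), E. apply Cmult_0_r. Qed.

(** * Continuity and holomorphy for the metric [Cmod] *)

(* Coquelicot's product rule for complex functions lives on [AbsRing_NormedModule C_AbsRing],
   which is not convertible to [C_NormedModule]; the calculus below is therefore developed
   directly for the metric [Cmod]. *)
Definition nearC (x : C) (P : C -> Prop) : Prop :=
  exists d : R, (0 < d)%R /\ forall y, (Cmod (y - x) < d)%R -> P y.

Lemma nearC_and (x : C) (P Q : C -> Prop) :
  nearC x P -> nearC x Q -> nearC x (fun y => P y /\ Q y).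
Proof.
  intros [d1 [Hd1 H1]] [d2 [Hd2 H2]]. exists (Rmin d1 d2). split; [now apply Rmin_pos |].
  intros y Hy. split; [apply H1 | apply H2]; eapply Rlt_le_trans; eauto; [apply Rmin_l | apply Rmin_r].
Qed.

Lemma nearC_mono (x : C) (P Q : C -> Prop) :
  (forall y, P y -> Q y) -> nearC x P -> nearC x Q.
Proof. intros HPQ [d [Hd H]]. exists d. split; auto. Qed.

Lemma nearC_mono2 (x : C) (P Q S : C -> Prop) :
  (forall y, P y -> Q y -> S y) -> nearC x P -> nearC x Q -> nearC x S.
Proof. intros HS HP HQ. apply (nearC_mono x (fun y => P y /\ Q y)); [intuition | now apply nearC_and]. Qed.

Lemma nearC_always (x : C) (P : C -> Prop) : (forall y, P y) -> nearC x P.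
Proof. intros H. exists 1%R. split; [lra | auto]. Qed.

Lemma nearC_self (x : C) (P : C -> Prop) : nearC x P -> P x.
Proof. intros [d [Hd H]]. apply H. replace (x - x) with (RtoC 0) by ring. now rewrite Cmod_0. Qed.

Lemma nearC_of_open (U : C -> Prop) (x : C) : Copen U -> U x -> nearC x U.
Proof. intros HU Hx. exact (HU x Hx). Qed.

Lemma nearC_Cdisc (c : C) (r : R) (x : C) : Cdisc c r x -> nearC x (Cdisc c r).
Proof.
  unfold Cdisc. intros Hx. exists (r - Cmod (x - c))%R. split; [lra |].
  intros y Hy. replace (y - c) with ((y - x) + (x - c)) by ring.
  eapply Rle_lt_trans; [apply Cmod_triangle | lra].
Qed.

Lemma Cdisc_open (c : C) (r : R) : Copen (Cdisc c r).
Proof. intros x Hx. exact (nearC_Cdisc c r x Hx). Qed.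

Lemma Cdisc_convex (c : C) (r : R) : Cconvex (Cdisc c r).
Proof.
  intros x y t Hx Hy Ht. unfold Cdisc in *.
  replace (x + RtoC t * (y - x) - c) with (RtoC (1 - t) * (x - c) + RtoC t * (y - c))
    by (rewrite RtoC_minus; ring).
  eapply Rle_lt_trans; [apply Cmod_triangle |]. rewrite !Cmod_mult, !Cmod_R, !Rabs_right by lra.
  destruct (Req_dec t 0) as [-> | Ht0]; nra.
Qed.

Lemma Cdisc_0_center (r : R) (Q : C) : Cdisc 0 r Q <-> (Cmod Q < r)%R.
Proof. unfold Cdisc. now replace (Q - 0) with Q by ring. Qed.

Definition cont_at (f : C -> C) (x : C) : Prop :=
  forall eps : R, (0 < eps)%R -> nearC x (fun y => Cmod (f y - f x) < eps)%R.

Lemma cont_at_const (c x : C) : cont_at (fun _ => c) x.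
Proof.
  intros eps He. apply nearC_always. intros y.
  replace (c - c) with (RtoC 0) by ring. now rewrite Cmod_0.
Qed.

Lemma cont_at_id (x : C) : cont_at (fun y => y) x.
Proof. intros eps He. exists eps. split; auto. Qed.

Lemma cont_at_bounded (f : C -> C) (x : C) :
  cont_at f x -> nearC x (fun y => Cmod (f y) <= Cmod (f x) + 1)%R.
Proof.
  intros Hf. eapply nearC_mono; [intros y H | exact (Hf 1%R Rlt_0_1)]. simpl in H.
  replace (f y) with (f x + (f y - f x)) by ring.
  eapply Rle_trans; [apply Cmod_triangle | lra].
Qed.

Lemma cont_at_plus (f g : C -> C) (x : C) :
  cont_at f x -> cont_at g x -> cont_at (fun y => f y + g y) x.
Proof.
  intros Hf Hg eps He.
  eapply nearC_mono2; [intros y H1 H2 | exact (Hf (eps / 2)%R ltac:(lra)) | exact (Hg (eps / 2)%R ltac:(lra))].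
  replace (f y + g y - (f x + g x)) with ((f y - f x) + (g y - g x)) by ring.
  eapply Rle_lt_trans; [apply Cmod_triangle | lra].
Qed.

Lemma cont_at_opp (f : C -> C) (x : C) : cont_at f x -> cont_at (fun y => - f y) x.
Proof.
  intros Hf eps He. eapply nearC_mono; [intros y Hy | exact (Hf eps He)]. simpl in Hy.
  replace (- f y - - f x) with (- (f y - f x)) by ring. now rewrite Cmod_opp.
Qed.

Lemma cont_at_minus (f g : C -> C) (x : C) :
  cont_at f x -> cont_at g x -> cont_at (fun y => f y - g y) x.
Proof. intros Hf Hg. apply cont_at_plus; [exact Hf | now apply cont_at_opp]. Qed.

Lemma cont_at_mult (f g : C -> C) (x : C) :
  cont_at f x -> cont_at g x -> cont_at (fun y => f y * g y) x.
Proof.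
  intros Hf Hg eps He.
  set (A := (Cmod (f x) + 1)%R). set (B := (Cmod (g x) + 1)%R).
  assert (HA : (0 < A)%R) by (unfold A; pose proof (Cmod_ge_0 (f x)); lra).
  assert (HB : (0 < B)%R) by (unfold B; pose proof (Cmod_ge_0 (g x)); lra).
  assert (Hf' := Hf (eps / (2 * B))%R ltac:(apply Rdiv_lt_0_compat; lra)).
  assert (Hg' := Hg (eps / (2 * A))%R ltac:(apply Rdiv_lt_0_compat; lra)).
  eapply nearC_mono2; [intros y H1 H2 | exact (nearC_and _ _ _ Hf' (cont_at_bounded g x Hg)) | exact Hg'].
  simpl in H1, H2. destruct H1 as [H1 Hb].
  replace (f y * g y - f x * g x) with ((f y - f x) * g y + f x * (g y - g x)) by ring.
  eapply Rle_lt_trans; [apply Cmod_triangle |]. rewrite !Cmod_mult.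
  assert (E1 : (Cmod (f y - f x) * Cmod (g y) <= eps / (2 * B) * B)%R).
  { unfold B in *. apply Rmult_le_compat; try apply Cmod_ge_0; lra. }
  assert (E2 : (Cmod (f x) * Cmod (g y - g x) < A * (eps / (2 * A)))%R).
  { pose proof (Cmod_ge_0 (f x)). pose proof (Cmod_ge_0 (g y - g x)). unfold A in *. nra. }
  replace (eps / (2 * B) * B)%R with (eps / 2)%R in E1 by (field; lra).
  replace (A * (eps / (2 * A)))%R with (eps / 2)%R in E2 by (field; lra). lra.
Qed.

Lemma cont_at_scal (c : C) (f : C -> C) (x : C) :
  cont_at f x -> cont_at (fun y => c * f y) x.
Proof. intros Hf. apply cont_at_mult; [apply cont_at_const | exact Hf]. Qed.

Lemma cont_at_mod_lower (f : C -> C) (x : C) :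
  cont_at f x -> f x <> 0 -> nearC x (fun y => Cmod (f x) / 2 <= Cmod (f y))%R.
Proof.
  intros Hf Hx. assert (HA : (0 < Cmod (f x))%R) by now apply Cmod_gt_0.
  eapply nearC_mono; [intros y H | exact (Hf (Cmod (f x) / 2)%R ltac:(lra))]. simpl in H.
  pose proof (Cmod_triangle (f y) (- (f y - f x))) as Htri. rewrite Cmod_opp in Htri.
  replace (f y + - (f y - f x)) with (f x) in Htri by ring. lra.
Qed.

Lemma cont_at_near_neq_0 (f : C -> C) (x : C) :
  cont_at f x -> f x <> 0 -> nearC x (fun y => f y <> 0).
Proof.
  intros Hf Hx. eapply nearC_mono; [intros y Hy E | exact (cont_at_mod_lower f x Hf Hx)].
  simpl in Hy. rewrite E, Cmod_0 in Hy. apply Cmod_gt_0 in Hx. lra.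
Qed.

Lemma cont_at_inv (f : C -> C) (x : C) :
  cont_at f x -> f x <> 0 -> cont_at (fun y => / f y) x.
Proof.
  intros Hf Hx eps He. set (A := Cmod (f x)).
  assert (HA : (0 < A)%R) by now apply Cmod_gt_0.
  assert (Heps : (0 < eps * A * A / 2)%R).
  { apply Rdiv_lt_0_compat; [repeat apply Rmult_lt_0_compat |]; lra. }
  eapply nearC_mono2; [intros y H1 H2 | exact (cont_at_mod_lower f x Hf Hx) | exact (Hf _ Heps)].
  simpl in H1, H2. fold A in H1, H2.
  assert (Hy : f y <> 0) by (intro E; rewrite E, Cmod_0 in H1; lra).
  replace (/ f y - / f x) with ((f x - f y) * / f y * / f x) by (field; auto).
  rewrite !Cmod_mult, !Cmod_inv, <- Cmod_opp by auto. fold A.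
  replace (- (f x - f y)) with (f y - f x) by ring.
  apply Rle_lt_trans with (Cmod (f y - f x) * (2 / A) * / A)%R.
  - apply Rmult_le_compat_r; [left; now apply Rinv_0_lt_compat |].
    apply Rmult_le_compat_l; [apply Cmod_ge_0 |].
    replace (2 / A)%R with (/ (A / 2))%R by (field; lra). apply Rinv_le_contravar; lra.
  - replace (Cmod (f y - f x) * (2 / A) * / A)%R with (Cmod (f y - f x) * 2 / (A * A))%R by (field; lra).
    apply Rmult_lt_reg_r with (A * A)%R; [nra |].
    replace (Cmod (f y - f x) * 2 / (A * A) * (A * A))%R with (Cmod (f y - f x) * 2)%R by (field; lra).
    lra.
Qed.

Lemma cont_at_comp (f g : C -> C) (x : C) :
  cont_at f x -> cont_at g (f x) -> cont_at (fun y => g (f y)) x.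
Proof.
  intros Hf Hg eps He. destruct (Hg eps He) as [d [Hd H]].
  eapply nearC_mono; [intros y Hy; apply H; exact Hy | exact (Hf d Hd)].
Qed.

Lemma cont_at_lipschitz (f : C -> C) (x : C) (K : R) :
  nearC x (fun y => Cmod (f y - f x) <= K * Cmod (y - x))%R -> cont_at f x.
Proof.
  intros [d [Hd H]] eps He.
  set (K' := (Rabs K + 1)%R). assert (HK : (0 < K')%R) by (unfold K'; pose proof (Rabs_pos K); lra).
  exists (Rmin d (eps / K')). split; [apply Rmin_pos; [lra | now apply Rdiv_lt_0_compat] |].
  intros y Hy. pose proof (Rmin_l d (eps / K')). pose proof (Rmin_r d (eps / K')).
  specialize (H y ltac:(lra)). pose proof (Cmod_ge_0 (y - x)).
  assert (Hlt : (K' * Cmod (y - x) < eps)%R).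
  { replace eps with (K' * (eps / K'))%R by (field; lra). apply Rmult_lt_compat_l; lra. }
  assert (K * Cmod (y - x) <= K' * Cmod (y - x))%R.
  { apply Rmult_le_compat_r; [lra |]. unfold K'. pose proof (Rle_abs K). lra. }
  lra.
Qed.

Lemma cont_at_Csqrt (x : C) : (0 < Re (Csqrt x))%R -> cont_at Csqrt x.
Proof.
  intros H. apply cont_at_lipschitz with (/ Re (Csqrt x))%R. apply nearC_always. intros y.
  apply Rmult_le_reg_r with (Re (Csqrt x)); [exact H |].
  replace (/ Re (Csqrt x) * Cmod (y - x) * Re (Csqrt x))%R with (Cmod (y - x)) by (field; lra).
  now apply Csqrt_lipschitz.
Qed.

Lemma cont_at_continuous (f : C -> C) (x : C) : cont_at f x -> continuous f x.
Proof.
  intros Hf P [e He].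
  destruct (Hf e (cond_pos e)) as [d [Hd Hy]].
  assert (Hs : (0 < sqrt 2)%R) by (apply sqrt_lt_R0; lra).
  exists (mkposreal (d / sqrt 2) (Rdiv_lt_0_compat _ _ Hd Hs)). intros y Hxy.
  apply He, C_NormedModule_mixin_compat1, Hy.
  pose proof (C_NormedModule_mixin_compat2 x y _ Hxy) as Hb. simpl in Hb.
  replace (sqrt 2 * (d / sqrt 2))%R with d in Hb by (field; lra). exact Hb.
Qed.

Definition is_cderive (f : C -> C) (x l : C) : Prop :=
  forall eps : R, (0 < eps)%R ->
    nearC x (fun y => Cmod (f y - f x - (y - x) * l) <= eps * Cmod (y - x))%R.

Definition holo_at (f : C -> C) (x : C) : Prop := exists l, is_cderive f x l.

Lemma is_cderive_is_derive (f : C -> C) (x l : C) :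
  is_cderive f x l -> is_derive (K := C_AbsRing) (V := C_NormedModule) f x l.
Proof.
  intros H. split; [apply is_linear_scal_l |].
  intros x' Hx'.
  assert (E := is_filter_lim_locally_unique (K := C_AbsRing)
                 (V := AbsRing_NormedModule C_AbsRing) x x' Hx'). subst x'.
  intros eps. destruct (H eps (cond_pos eps)) as [d [Hd Hy]].
  exists (mkposreal d Hd). intros y Hxy. exact (Hy y Hxy).
Qed.

Lemma is_derive_is_cderive (f : C -> C) (x l : C) :
  is_derive (K := C_AbsRing) (V := C_NormedModule) f x l -> is_cderive f x l.
Proof.
  intros [_ H] eps He.
  destruct (H x (fun P HP => HP) (mkposreal eps He)) as [d Hd].
  exists d. split; [apply cond_pos |]. intros y Hy. exact (Hd y Hy).
Qed.

Lemma holo_at_ex_derive (f : C -> C) (x : C) :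
  holo_at f x -> ex_derive (K := C_AbsRing) (V := C_NormedModule) f x.
Proof. intros [l H]. exists l. now apply is_cderive_is_derive. Qed.

Lemma ex_derive_holo_at (f : C -> C) (x : C) :
  ex_derive (K := C_AbsRing) (V := C_NormedModule) f x -> holo_at f x.
Proof. intros [l H]. exists l. now apply is_derive_is_cderive. Qed.

Lemma holo_at_cont_at (f : C -> C) (x : C) : holo_at f x -> cont_at f x.
Proof.
  intros [l H]. apply cont_at_lipschitz with (1 + Cmod l)%R.
  eapply nearC_mono; [intros y Hy | exact (H 1%R Rlt_0_1)]. simpl in Hy.
  replace (f y - f x) with ((f y - f x - (y - x) * l) + (y - x) * l) by ring.
  eapply Rle_trans; [apply Cmod_triangle |]. rewrite Cmod_mult. lra.
Qed.

(* Caratheodory's criterion. *)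
Lemma is_cderive_factor (g h k : C -> C) (x l : C) :
  is_cderive h x l -> cont_at k x ->
  nearC x (fun y => g y - g x = (h y - h x) * k y) ->
  is_cderive g x (l * k x).
Proof.
  intros Hh Hk Hg eps He.
  set (A := (Cmod (k x) + 1)%R). set (D := (Cmod l + 1)%R).
  assert (HA : (0 < A)%R) by (unfold A; pose proof (Cmod_ge_0 (k x)); lra).
  assert (HD : (0 < D)%R) by (unfold D; pose proof (Cmod_ge_0 l); lra).
  assert (Hh' := Hh (eps / (2 * A))%R ltac:(apply Rdiv_lt_0_compat; lra)).
  assert (Hk' := Hk (eps / (2 * D))%R ltac:(apply Rdiv_lt_0_compat; lra)).
  eapply nearC_mono2; [intros y H1 H2 | exact (nearC_and _ _ _ Hg Hh')
                      | exact (nearC_and _ _ _ Hk' (cont_at_bounded k x Hk))].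
  simpl in H1, H2. destruct H1 as [Eg H1], H2 as [H2 Hb]. rewrite Eg.
  replace ((h y - h x) * k y - (y - x) * (l * k x)) with
    ((h y - h x - (y - x) * l) * k y + (y - x) * l * (k y - k x)) by ring.
  eapply Rle_trans; [apply Cmod_triangle |]. rewrite !Cmod_mult.
  pose proof (Cmod_ge_0 (y - x)). pose proof (Cmod_ge_0 l).
  pose proof (Cmod_ge_0 (k y - k x)). pose proof (Cmod_ge_0 (h y - h x - (y - x) * l)).
  assert (E1 : (Cmod (h y - h x - (y - x) * l) * Cmod (k y) <= eps / (2 * A) * Cmod (y - x) * A)%R).
  { unfold A in *. apply Rmult_le_compat; auto; apply Cmod_ge_0. }
  assert (E2 : (Cmod (y - x) * Cmod l * Cmod (k y - k x) <= Cmod (y - x) * D * (eps / (2 * D)))%R).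
  { unfold D in *. apply Rmult_le_compat; [nra | lra | apply Rmult_le_compat_l; lra | lra]. }
  replace (eps / (2 * A) * Cmod (y - x) * A)%R with (eps / 2 * Cmod (y - x))%R in E1 by (field; lra).
  replace (Cmod (y - x) * D * (eps / (2 * D)))%R with (eps / 2 * Cmod (y - x))%R in E2 by (field; lra).
  lra.
Qed.

Lemma holo_at_factor (g h k : C -> C) (x : C) :
  holo_at h x -> cont_at k x ->
  nearC x (fun y => g y - g x = (h y - h x) * k y) -> holo_at g x.
Proof. intros [l Hh] Hk Hg. exists (l * k x). now apply is_cderive_factor with h. Qed.

Lemma holo_at_id (x : C) : holo_at (fun y => y) x.
Proof.
  exists 1. intros eps He. apply nearC_always. intros y.
  replace (y - x - (y - x) * 1) with (RtoC 0) by ring. rewrite Cmod_0.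
  pose proof (Cmod_ge_0 (y - x)). nra.
Qed.

Lemma holo_at_const (c x : C) : holo_at (fun _ => c) x.
Proof.
  apply holo_at_factor with (fun y => y) (fun _ => 0); [apply holo_at_id | apply cont_at_const |].
  apply nearC_always. intros y. ring.
Qed.

Lemma holo_at_ext (f g : C -> C) (x : C) :
  nearC x (fun y => f y = g y) -> holo_at f x -> holo_at g x.
Proof.
  intros E Hf. apply holo_at_factor with f (fun _ => 1); [exact Hf | apply cont_at_const |].
  eapply nearC_mono; [intros y Hy | exact E]. simpl in Hy.
  rewrite <- Hy, <- (nearC_self _ _ E). ring.
Qed.

Lemma holo_at_scal (c : C) (f : C -> C) (x : C) : holo_at f x -> holo_at (fun y => c * f y) x.
Proof.
  intros Hf. apply holo_at_factor with f (fun _ => c); [exact Hf | apply cont_at_const |].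
  apply nearC_always. intros y. ring.
Qed.

Lemma holo_at_opp (f : C -> C) (x : C) : holo_at f x -> holo_at (fun y => - f y) x.
Proof.
  intros Hf. apply holo_at_factor with f (fun _ => - (1)); [exact Hf | apply cont_at_const |].
  apply nearC_always. intros y. ring.
Qed.

Lemma holo_at_plus (f g : C -> C) (x : C) :
  holo_at f x -> holo_at g x -> holo_at (fun y => f y + g y) x.
Proof.
  intros [a Ha] [b Hb]. exists (a + b). intros eps He.
  eapply nearC_mono2; [intros y H1 H2 | exact (Ha (eps / 2)%R ltac:(lra)) | exact (Hb (eps / 2)%R ltac:(lra))].
  simpl in H1, H2.
  replace (f y + g y - (f x + g x) - (y - x) * (a + b)) with
    ((f y - f x - (y - x) * a) + (g y - g x - (y - x) * b)) by ring.
  eapply Rle_trans; [apply Cmod_triangle | lra].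
Qed.

Lemma holo_at_minus (f g : C -> C) (x : C) :
  holo_at f x -> holo_at g x -> holo_at (fun y => f y - g y) x.
Proof. intros Hf Hg. apply holo_at_plus; [exact Hf | now apply holo_at_opp]. Qed.

Lemma holo_at_sqr (f : C -> C) (x : C) : holo_at f x -> holo_at (fun y => f y * f y) x.
Proof.
  intros Hf. apply holo_at_factor with f (fun y => f y + f x); [exact Hf | |].
  - apply cont_at_plus; [now apply holo_at_cont_at | apply cont_at_const].
  - apply nearC_always. intros y. ring.
Qed.

Lemma holo_at_mult (f g : C -> C) (x : C) :
  holo_at f x -> holo_at g x -> holo_at (fun y => f y * g y) x.
Proof.
  intros Hf Hg.
  apply holo_at_ext with (fun y => / 4 * ((f y + g y) * (f y + g y)) + - / 4 * ((f y - g y) * (f y - g y))).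
  - apply nearC_always. intros y. field.
  - apply holo_at_plus; apply holo_at_scal, holo_at_sqr;
      [apply holo_at_plus | apply holo_at_minus]; assumption.
Qed.

Lemma holo_at_inv (f : C -> C) (x : C) : holo_at f x -> f x <> 0 -> holo_at (fun y => / f y) x.
Proof.
  intros Hf Hx. pose proof (holo_at_cont_at f x Hf) as Hc.
  apply holo_at_factor with f (fun y => - (1) * / (f y * f x)); [exact Hf | |].
  - apply cont_at_scal, cont_at_inv; [| now apply Cmult_neq_0].
    apply cont_at_mult; [exact Hc | apply cont_at_const].
  - eapply nearC_mono; [intros y Hy | exact (cont_at_near_neq_0 f x Hc Hx)]. simpl in Hy.
    field. auto.
Qed.

Lemma holo_at_div (f g : C -> C) (x : C) :
  holo_at f x -> holo_at g x -> g x <> 0 -> holo_at (fun y => f y / g y) x.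
Proof. intros Hf Hg Hx. apply holo_at_mult; [exact Hf | now apply holo_at_inv]. Qed.

Lemma holo_at_continuous_sqrt (k h : C -> C) (x : C) :
  cont_at k x -> nearC x (fun y => k y * k y = h y) -> k x <> 0 -> holo_at h x -> holo_at k x.
Proof.
  intros Hc Hsq Hx Hh.
  assert (Hc2 : cont_at (fun y => k y + k x) x) by (apply cont_at_plus; [exact Hc | apply cont_at_const]).
  assert (Hx2 : k x + k x <> 0).
  { replace (k x + k x) with (RtoC 2 * k x) by ring. apply Cmult_neq_0; [apply RtoC_neq_0; lra | exact Hx]. }
  apply holo_at_factor with h (fun y => / (k y + k x)); [exact Hh | now apply cont_at_inv |].
  eapply nearC_mono2; [intros y Hy Hne | exact Hsq | exact (cont_at_near_neq_0 _ x Hc2 Hx2)].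
  simpl in Hy, Hne. rewrite <- Hy, <- (nearC_self _ _ Hsq). field. exact Hne.
Qed.

(** * The cubic [Pz] *)

Definition dPz (z w : C) : C := 3 * w * w - 2 * (z + 1) * w + z.

Definition Pz_dd (z x y : C) : C := x * x + x * y + y * y - (z + 1) * (x + y) + z.

Lemma Pz_sub (z x y : C) : Pz z x - Pz z y = (x - y) * Pz_dd z x y.
Proof. unfold Pz, Pz_dd. ring. Qed.

Lemma Pz_dd_diag (z x : C) : Pz_dd z x x = dPz z x.
Proof. unfold Pz_dd, dPz. ring. Qed.

Lemma Pz_dd_eq_0 (z x y : C) : Pz z x = Pz z y -> x <> y -> Pz_dd z x y = 0.
Proof.
  intros E Hxy.
  assert (E' : (x - y) * Pz_dd z x y = 0) by (rewrite <- Pz_sub, E; ring).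
  apply Cmult_integral in E' as [E' | E']; [| exact E'].
  exfalso. apply Hxy. replace x with (x - y + y) by ring. rewrite E'. ring.
Qed.

Lemma cont_at_Pz_dd (z c : C) (g : C -> C) (x : C) :
  cont_at g x -> cont_at (fun y => Pz_dd z (g y) c) x.
Proof.
  intros Hg. unfold Pz_dd.
  repeat first [ apply cont_at_plus | apply cont_at_minus | apply cont_at_opp | apply cont_at_mult
               | apply cont_at_const | assumption ].
Qed.

Lemma holo_at_dPz (z : C) (g : C -> C) (x : C) : holo_at g x -> holo_at (fun y => dPz z (g y)) x.
Proof.
  intros Hg. unfold dPz.
  repeat first [ apply holo_at_plus | apply holo_at_minus | apply holo_at_opp | apply holo_at_mult
               | apply holo_at_const | assumption ].
Qed.

Lemma holo_at_Pz_dd (z c : C) (g : C -> C) (x : C) :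
  holo_at g x -> holo_at (fun y => Pz_dd z (g y) c) x.
Proof.
  intros Hg. unfold Pz_dd.
  repeat first [ apply holo_at_plus | apply holo_at_minus | apply holo_at_opp | apply holo_at_mult
               | apply holo_at_const | assumption ].
Qed.

Lemma holo_at_cubic_inverse (z : C) (g : C -> C) (x : C) :
  cont_at g x -> nearC x (fun y => Pz z (g y) = y) -> dPz z (g x) <> 0 -> holo_at g x.
Proof.
  intros Hc Hg Hx.
  apply holo_at_factor with (fun y => y) (fun y => / Pz_dd z (g y) (g x)); [apply holo_at_id | |].
  - apply cont_at_inv; [now apply cont_at_Pz_dd | now rewrite Pz_dd_diag].
  - eapply nearC_mono; [intros y Hy | exact Hg]. simpl in Hy.
    assert (E : (g y - g x) * Pz_dd z (g y) (g x) = y - x).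
    { now rewrite <- Pz_sub, Hy, (nearC_self _ _ Hg). }
    destruct (Ceq_dec (Pz_dd z (g y) (g x)) 0) as [E0 | E0].
    + rewrite E0, Cmult_0_r in E.
      assert (y = x) by (replace y with (y - x + x) by ring; rewrite <- E; ring).
      subst y. ring.
    + rewrite <- E. field. exact E0.
Qed.

(* Viete: two roots [a], [c] of [Pz z w = Pz z b] other than [b] satisfy [a + b + c = z + 1]. *)
Lemma dPz_three_roots (z a b c : C) :
  Pz z a = Pz z b -> Pz z c = Pz z b -> a <> b -> c <> b -> a <> c ->
  (b - a) * (b - c) = dPz z b.
Proof.
  intros Hab Hcb nab ncb nac.
  pose proof (Pz_dd_eq_0 z a b Hab nab) as Ma. pose proof (Pz_dd_eq_0 z c b Hcb ncb) as Mc.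
  assert (Hc : c = z + 1 - a - b).
  { assert (E : (a - c) * (a + c + b - (z + 1)) = 0).
    { replace ((a - c) * (a + c + b - (z + 1))) with (Pz_dd z a b - Pz_dd z c b)
        by (unfold Pz_dd; ring). rewrite Ma, Mc. ring. }
    apply Cmult_integral in E as [E | E].
    - exfalso. apply nac. replace a with (a - c + c) by ring. rewrite E. ring.
    - replace c with (a + c + b - (z + 1) + (z + 1 - a - b)) by ring. rewrite E. ring. }
  subst c. transitivity ((b - a) * (b - (z + 1 - a - b)) + Pz_dd z a b); [rewrite Ma; ring |].
  unfold dPz, Pz_dd. ring.
Qed.

Lemma Pz_at_0 (z : C) : Pz z 0 = 0.
Proof. unfold Pz. ring. Qed.

Lemma Pz_at_1 (z : C) : Pz z 1 = 0.
Proof. unfold Pz. ring. Qed.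

(* [partner z c] is the third root of [Pz z w = Pz z c] when [c] is a double root. *)
Definition partner (z c : C) : C := z + 1 - 2 * c.

Lemma Pz_partner (z c : C) : Pz z (partner z c) - Pz z c = (partner z c - c) * dPz z c.
Proof. unfold Pz, partner, dPz. ring. Qed.

Lemma dPz_w_plus (z : C) : dPz z (w_plus z) = 0.
Proof.
  transitivity ((Csqrt (z * z - z + 1) * Csqrt (z * z - z + 1) - (z * z - z + 1)) / 3);
    [unfold dPz, w_plus; field | rewrite Csqrt_sq; field].
Qed.

Lemma Q_plus_partner (z : C) : Q_plus z = Pz z (partner z (w_plus z)).
Proof.
  unfold Q_plus.
  pose proof (Pz_partner z (w_plus z)) as E. rewrite dPz_w_plus, Cmult_0_r in E.
  replace (Pz z (partner z (w_plus z))) with (Pz z (partner z (w_plus z)) - Pz z (w_plus z) + Pz z (w_plus z))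
    by ring.
  rewrite E. ring.
Qed.

(* The discriminant of [(Pz z w - Pz z g) / (w - g)] as a quadratic in [w]. *)
Definition resid_disc (z g : C) : C := - 3 * g * g + 2 * (z + 1) * g + (z - 1) * (z - 1).

Lemma resid_disc_factor (z x : C) :
  resid_disc z x = 3 * (x - partner z (w_plus z)) * (partner z (w_minus z) - x).
Proof.
  transitivity (3 * (x - partner z (w_plus z)) * (partner z (w_minus z) - x)
    - 4 / 3 * (Csqrt (z * z - z + 1) * Csqrt (z * z - z + 1) - (z * z - z + 1)));
    [unfold resid_disc, partner, w_plus, w_minus; field | rewrite Csqrt_sq; ring].
Qed.

Section OtherRoots.
Variables (z g d : C).
Hypothesis Hd : d * d = resid_disc z g.

Let w := (z + 1 - g + d) / 2.
Let e1 := (z + 1 - 3 * g + d) / 2.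
Let e2 := (z + 1 - 3 * g - d) / 2.

Lemma Pz_other_root : Pz z w = Pz z g.
Proof.
  transitivity (Pz z g + (w - g) * ((d * d - resid_disc z g) / 4));
    [unfold w, Pz, resid_disc; field | rewrite Hd; field].
Qed.

Lemma dPz_other_root : dPz z w = e1 * d.
Proof.
  transitivity (e1 * d + (d * d - resid_disc z g) / 4);
    [unfold w, e1, dPz, resid_disc; field | rewrite Hd; field].
Qed.

Lemma other_root_factors : e1 * e2 = dPz z g.
Proof.
  transitivity (dPz z g - (d * d - resid_disc z g) / 4);
    [unfold e1, e2, dPz, resid_disc; field | rewrite Hd; field].
Qed.

End OtherRoots.

Lemma inv_dPz_other_root (z g s k : C) :
  (s * k) * (s * k) = resid_disc z g -> dPz z g <> 0 -> s <> 0 -> k <> 0 ->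
  / dPz z ((z + 1 - g + s * k) / 2) = - / (2 * dPz z g) + (z + 1 - 3 * g) / (2 * dPz z g * k) / s.
Proof.
  intros Hd Hg Hs Hk.
  rewrite (dPz_other_root z g (s * k) Hd). rewrite <- (other_root_factors z g (s * k) Hd) in *.
  set (e1 := (z + 1 - 3 * g + s * k) / 2) in *.
  set (e2 := (z + 1 - 3 * g - s * k) / 2) in *.
  assert (H1 : e1 <> 0) by (intro E; apply Hg; rewrite E; ring).
  assert (H2 : e2 <> 0) by (intro E; apply Hg; rewrite E; ring).
  assert (E1 : e1 = e2 + s * k) by (unfold e1, e2; field). rewrite E1 in *.
  replace (z + 1 - 3 * g) with (2 * e2 + s * k) by (unfold e2; field).
  field. repeat split; auto.
Qed.

(** * Local inversion of the cubic *)

Lemma geometric_steps_bound (x : nat -> C) (K : R) :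
  (forall n, (Cmod (x (S n) - x n) <= K * (/ 2) ^ n)%R) ->
  forall n p, (n <= p)%nat -> (Cmod (x p - x n) <= 2 * K * (/ 2) ^ n)%R.
Proof.
  intros Hstep n p Hnp.
  assert (Hinv : forall k, (Cmod (x (n + k)%nat - x n) <= 2 * K * (/ 2) ^ n - 2 * K * (/ 2) ^ (n + k))%R).
  { induction k as [| k IH].
    - rewrite Nat.add_0_r. replace (x n - x n) with (RtoC 0) by ring. rewrite Cmod_0. lra.
    - rewrite Nat.add_succ_r.
      replace (x (S (n + k)) - x n) with ((x (S (n + k)) - x (n + k)%nat) + (x (n + k)%nat - x n)) by ring.
      eapply Rle_trans; [apply Cmod_triangle |]. pose proof (Hstep (n + k)%nat).
      replace (K * (/ 2) ^ S (n + k))%R with (/ 2 * (K * (/ 2) ^ (n + k)))%R by (simpl; ring).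
      replace (2 * K * (/ 2) ^ (n + k))%R with (2 * (K * (/ 2) ^ (n + k)))%R in IH by ring.
      replace (2 * K * (/ 2) ^ S (n + k))%R with (K * (/ 2) ^ (n + k))%R by (simpl; field).
      lra. }
  replace p with (n + (p - n))%nat by lia. eapply Rle_trans; [apply Hinv |].
  assert (0 <= K * (/ 2) ^ (n + (p - n)))%R.
  { eapply Rle_trans; [apply Cmod_ge_0 | apply Hstep]. }
  lra.
Qed.

Lemma geometric_cauchy_C (x : nat -> C) (K : R) :
  (forall n, (Cmod (x (S n) - x n) <= K * (/ 2) ^ n)%R) ->
  exists w, forall eps, (0 < eps)%R ->
    exists N, forall n, (N <= n)%nat -> (Cmod (x n - w) < eps)%R.
Proof.
  intros Hstep. pose proof (geometric_steps_bound x K Hstep) as Hx.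
  assert (Hsmall : forall eps, (0 < eps)%R -> exists N, forall n, (N <= n)%nat -> (2 * K * (/ 2) ^ n < eps)%R).
  { intros eps He.
    set (K' := (2 * Rabs K + 1)%R). assert (HK : (0 < K')%R) by (unfold K'; pose proof (Rabs_pos K); lra).
    destruct (pow_lt_1_zero (/ 2) ltac:(rewrite Rabs_right; lra) (eps / K'))
      as [N HN]; [now apply Rdiv_lt_0_compat |].
    exists N. intros n Hn. specialize (HN n Hn).
    assert (Hp : (0 < (/ 2) ^ n)%R) by (apply pow_lt; lra).
    rewrite Rabs_right in HN by lra.
    apply Rmult_lt_compat_l with (r := K') in HN; [| exact HK].
    replace (K' * (eps / K'))%R with eps in HN by (field; lra).
    pose proof (Rle_abs K). unfold K' in *. nra. }
  assert (Hcomp : forall f : C -> R, (forall u, (Rabs (f u) <= Cmod u)%R) ->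
            (forall u v, f (u - v) = (f u - f v)%R) -> Cauchy_crit (fun n => f (x n))).
  { intros f Hf Hfl eps He. destruct (Hsmall eps He) as [N HN]. exists N. intros n p Hn Hp.
    unfold Rdist. rewrite <- Hfl.
    destruct (Nat.le_ge_cases n p) as [Hnp | Hnp].
    - replace (f (x n - x p)) with (Ropp (f (x p - x n))) by (rewrite !Hfl; ring).
      rewrite Rabs_Ropp.
      eapply Rle_lt_trans; [apply Hf | eapply Rle_lt_trans; [apply Hx; exact Hnp | apply HN; lia]].
    - eapply Rle_lt_trans; [apply Hf | eapply Rle_lt_trans; [apply Hx; exact Hnp | apply HN; lia]]. }
  destruct (Rcomplete.R_complete (fun n => Re (x n))) as [lr Hlr];
    [apply Hcomp; [apply re_le_Cmod | reflexivity] |].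
  destruct (Rcomplete.R_complete (fun n => Im (x n))) as [li Hli];
    [apply Hcomp; [apply Im_le_Cmod | reflexivity] |].
  exists (lr, li). intros eps He.
  destruct (Hlr (eps / 2)%R ltac:(lra)) as [N1 H1]. destruct (Hli (eps / 2)%R ltac:(lra)) as [N2 H2].
  exists (max N1 N2). intros n Hn. specialize (H1 n ltac:(lia)). specialize (H2 n ltac:(lia)).
  unfold Rdist in *. eapply Rle_lt_trans; [apply Cmod_le_Re_Im |]. simpl. unfold Re, Im, Rminus in *. lra.
Qed.

Lemma contraction_fixpoint (T : C -> C) (m : C) (rho : R) :
  (forall u, (Cmod (u - m) <= rho)%R -> (Cmod (T u - m) <= rho)%R) ->
  (forall u v, (Cmod (u - m) <= rho)%R -> (Cmod (v - m) <= rho)%R ->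
     (Cmod (T u - T v) <= / 2 * Cmod (u - v))%R) ->
  (0 <= rho)%R -> exists w, (Cmod (w - m) <= rho)%R /\ T w = w.
Proof.
  intros Hself Hcontr Hr.
  set (x := fun n : nat => Nat.iter n T m).
  assert (Hin : forall n, (Cmod (x n - m) <= rho)%R).
  { induction n as [| n IH]; simpl.
    - replace (m - m) with (RtoC 0) by ring. now rewrite Cmod_0.
    - now apply Hself. }
  assert (Hstep : forall n, (Cmod (x (S n) - x n) <= rho * (/ 2) ^ n)%R).
  { induction n as [| n IH].
    - simpl. rewrite Rmult_1_r. exact (Hin 1%nat).
    - change (x (S (S n)) - x (S n)) with (T (x (S n)) - T (x n)).
      eapply Rle_trans; [apply Hcontr; apply Hin |].
      replace (rho * (/ 2) ^ S n)%R with (/ 2 * (rho * (/ 2) ^ n))%R by (simpl; ring). lra. }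
  destruct (geometric_cauchy_C x rho Hstep) as [w Hconv].
  assert (Hw : (Cmod (w - m) <= rho)%R).
  { apply Rle_plus_epsilon. intros eps He. destruct (Hconv eps He) as [N HN].
    replace (w - m) with ((x N - m) - (x N - w)) by ring.
    eapply Rle_trans; [apply Cmod_sub_le |]. pose proof (Hin N). pose proof (HN N (le_n N)). lra. }
  exists w. split; [exact Hw |].
  assert (Hfix : (Cmod (T w - w) <= 0)%R).
  { apply Rle_plus_epsilon. intros eps He. destruct (Hconv (eps / 2)%R ltac:(lra)) as [N HN].
    replace (T w - w) with ((T w - T (x N)) + (x (S N) - w)) by (simpl; ring).
    eapply Rle_trans; [apply Cmod_triangle |].
    pose proof (Hcontr w (x N) Hw (Hin N)) as HTN.
    replace (w - x N) with (- (x N - w)) in HTN by ring. rewrite Cmod_opp in HTN.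
    pose proof (HN N (le_n N)). pose proof (HN (S N) ltac:(lia)). lra. }
  assert (E : T w - w = 0) by (apply Cmod_eq_0; pose proof (Cmod_ge_0 (T w - w)); lra).
  replace (T w) with (T w - w + w) by ring. rewrite E. ring.
Qed.

(* On the closed ball [B(m, rho)], [Pz_dd] stays within [c / 2] of [dPz z m]: this makes [Pz z]
   injective there, and [w |-> w - (Pz z w - Q) / dPz z m] a contraction of the ball. *)
Definition inverse_params (z m : C) (rho c b : R) : Prop :=
  (0 < rho)%R /\ (0 < c)%R /\ (c <= Cmod (dPz z m))%R /\ (Cmod (3 * m - z - 1) <= b)%R /\
  (2 * b * rho + 3 * rho * rho <= c / 2)%R.

Section LocalInverse.
Variables (z m : C) (rho c b : R).
Hypothesis Hparams : inverse_params z m rho c b.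

Lemma Pz_dd_near_dPz (x y : C) : (Cmod (x - m) <= rho)%R -> (Cmod (y - m) <= rho)%R ->
  (Cmod (Pz_dd z x y - dPz z m) <= c / 2)%R.
Proof.
  destruct Hparams as [Hr [Hc [Hcl [Hb Hs]]]]. intros Hx Hy.
  replace (Pz_dd z x y - dPz z m) with
    ((3 * m - z - 1) * ((x - m) + (y - m)) + ((x - m) * (x - m) + (x - m) * (y - m) + (y - m) * (y - m)))
    by (unfold Pz_dd, dPz; ring).
  set (u := x - m) in *. set (v := y - m) in *.
  assert (Hu := Cmod_ge_0 u). assert (Hv := Cmod_ge_0 v). assert (H0 := Cmod_ge_0 (3 * m - z - 1)).
  assert (Huv : (Cmod (u + v) <= 2 * rho)%R) by (pose proof (Cmod_triangle u v); lra).
  assert (Hquad : (Cmod (u * u + u * v + v * v) <= 3 * rho * rho)%R).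
  { eapply Rle_trans; [apply Cmod_triangle |].
    eapply Rle_trans; [apply Rplus_le_compat_r, Cmod_triangle |]. rewrite !Cmod_mult. nra. }
  assert (Hlin : (Cmod (3 * m - z - 1) * Cmod (u + v) <= b * (2 * rho))%R)
    by (apply Rmult_le_compat; auto; apply Cmod_ge_0).
  eapply Rle_trans; [apply Cmod_triangle |]. rewrite Cmod_mult. lra.
Qed.

Lemma Pz_dd_lower (x y : C) : (Cmod (x - m) <= rho)%R -> (Cmod (y - m) <= rho)%R ->
  (c / 2 <= Cmod (Pz_dd z x y))%R.
Proof.
  intros Hx Hy. pose proof (Pz_dd_near_dPz x y Hx Hy). destruct Hparams as [_ [_ [Hcl _]]].
  pose proof (Cmod_triangle (Pz_dd z x y) (- (Pz_dd z x y - dPz z m))) as Htri.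
  replace (Pz_dd z x y + - (Pz_dd z x y - dPz z m)) with (dPz z m) in Htri by ring.
  rewrite Cmod_opp in Htri. lra.
Qed.

Lemma Pz_dd_neq_0 (x y : C) : (Cmod (x - m) <= rho)%R -> (Cmod (y - m) <= rho)%R ->
  Pz_dd z x y <> 0.
Proof.
  intros Hx Hy E. pose proof (Pz_dd_lower x y Hx Hy) as Hlow. rewrite E, Cmod_0 in Hlow.
  destruct Hparams as [_ [Hc _]]. lra.
Qed.

Lemma Pz_inj_ball (x y : C) : (Cmod (x - m) <= rho)%R -> (Cmod (y - m) <= rho)%R ->
  Pz z x = Pz z y -> x = y.
Proof.
  intros Hx Hy E. destruct (Ceq_dec x y) as [Exy | Nxy]; [exact Exy |].
  exfalso. exact (Pz_dd_neq_0 x y Hx Hy (Pz_dd_eq_0 z x y E Nxy)).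
Qed.

Lemma Pz_inv_lipschitz (x y : C) : (Cmod (x - m) <= rho)%R -> (Cmod (y - m) <= rho)%R ->
  (Cmod (x - y) <= 2 / c * Cmod (Pz z x - Pz z y))%R.
Proof.
  intros Hx Hy. rewrite Pz_sub, Cmod_mult.
  pose proof (Pz_dd_lower x y Hx Hy). destruct Hparams as [_ [Hc _]].
  pose proof (Cmod_ge_0 (x - y)).
  apply Rle_trans with (2 / c * (Cmod (x - y) * (c / 2)))%R.
  - right. field. lra.
  - apply Rmult_le_compat_l; [apply Rlt_le, Rdiv_lt_0_compat; lra | apply Rmult_le_compat_l; lra].
Qed.

Lemma dPz_center_neq_0 : dPz z m <> 0.
Proof. destruct Hparams as [_ [Hc [Hcl _]]]. apply Cmod_gt_0. lra. Qed.

Lemma newton_step_contraction (Q u v : C) : (Cmod (u - m) <= rho)%R -> (Cmod (v - m) <= rho)%R ->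
  (Cmod ((u - (Pz z u - Q) / dPz z m) - (v - (Pz z v - Q) / dPz z m)) <= / 2 * Cmod (u - v))%R.
Proof.
  intros Hu Hv. pose proof dPz_center_neq_0 as Hd0. set (d := dPz z m) in *.
  assert (Hd : (0 < Cmod d)%R) by now apply Cmod_gt_0.
  replace (u - (Pz z u - Q) / d - (v - (Pz z v - Q) / d)) with
    ((u - v) - (Pz z u - Pz z v) / d) by (field; exact Hd0).
  rewrite Pz_sub.
  replace ((u - v) - (u - v) * Pz_dd z u v / d) with ((u - v) * (- (Pz_dd z u v - d) / d))
    by (field; exact Hd0).
  rewrite Cmod_mult, Cmod_div, Cmod_opp by exact Hd0.
  pose proof (Pz_dd_near_dPz u v Hu Hv) as Hnear. pose proof (Cmod_ge_0 (u - v)).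
  destruct Hparams as [_ [_ [Hcl _]]]. fold d in Hnear, Hcl.
  assert (Cmod (Pz_dd z u v - d) / Cmod d <= / 2)%R.
  { apply Rmult_le_reg_r with (Cmod d); [exact Hd |].
    replace (Cmod (Pz_dd z u v - d) / Cmod d * Cmod d)%R with (Cmod (Pz_dd z u v - d)) by (field; lra).
    lra. }
  nra.
Qed.

Lemma Pz_onto_ball (Q : C) : (Cmod (Pz z m - Q) <= c * rho / 2)%R ->
  exists w, (Cmod (w - m) <= rho)%R /\ Pz z w = Q.
Proof.
  intros HQ. pose proof dPz_center_neq_0 as Hd0. destruct Hparams as [Hr [Hc [Hcl _]]].
  set (d := dPz z m) in *. assert (Hd : (0 < Cmod d)%R) by now apply Cmod_gt_0.
  set (T := fun w => w - (Pz z w - Q) / d).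
  assert (HTm : (Cmod (T m - m) <= rho / 2)%R).
  { unfold T. replace (m - (Pz z m - Q) / d - m) with (- ((Pz z m - Q) / d)) by ring.
    rewrite Cmod_opp, Cmod_div by exact Hd0.
    apply Rmult_le_reg_r with (Cmod d); [exact Hd |].
    replace (Cmod (Pz z m - Q) / Cmod d * Cmod d)%R with (Cmod (Pz z m - Q)) by (field; lra). nra. }
  destruct (contraction_fixpoint T m rho) as [w [Hw Hfix]];
    [| exact (newton_step_contraction Q) | lra |].
  - intros u Hu. replace (T u - m) with ((T u - T m) + (T m - m)) by ring.
    eapply Rle_trans; [apply Cmod_triangle |].
    assert (Hm : (Cmod (m - m) <= rho)%R) by (replace (m - m) with (RtoC 0) by ring; rewrite Cmod_0; lra).
    assert (HTu : (Cmod (T u - T m) <= / 2 * Cmod (u - m))%R) by exact (newton_step_contraction Q u m Hu Hm).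
    lra.
  - exists w. split; [exact Hw |]. unfold T in Hfix.
    assert (E : (Pz z w - Q) / d = 0).
    { replace ((Pz z w - Q) / d) with (w - (w - (Pz z w - Q) / d)) by ring. rewrite Hfix. ring. }
    replace (Pz z w) with ((Pz z w - Q) / d * d + Q) by (field; exact Hd0). rewrite E. ring.
Qed.

End LocalInverse.

Definition ball_root (z m : C) (rho : R) (Q : C) : C :=
  epsilon (inhabits m) (fun w => (Cmod (w - m) <= rho)%R /\ Pz z w = Q).

Section BallRoot.
Variables (z m : C) (rho c b : R) (U : C -> Prop).
Hypotheses (Hparams : inverse_params z m rho c b) (HU : Copen U)
  (HUm : forall Q, U Q -> (Cmod (Pz z m - Q) <= c * rho / 2)%R).

Lemma ball_root_spec (Q : C) : U Q ->
  (Cmod (ball_root z m rho Q - m) <= rho)%R /\ Pz z (ball_root z m rho Q) = Q.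
Proof.
  intros HQ. unfold ball_root. apply epsilon_spec.
  exact (Pz_onto_ball z m rho c b Hparams Q (HUm Q HQ)).
Qed.

Lemma ball_root_unique (Q w : C) : U Q -> (Cmod (w - m) <= rho)%R -> Pz z w = Q ->
  ball_root z m rho Q = w.
Proof.
  intros HQ Hw E. destruct (ball_root_spec Q HQ) as [Hin Hroot].
  apply (Pz_inj_ball z m rho c b Hparams); auto. now rewrite Hroot, E.
Qed.

Lemma dPz_ball_root_neq_0 (Q : C) : U Q -> dPz z (ball_root z m rho Q) <> 0.
Proof.
  intros HQ. destruct (ball_root_spec Q HQ) as [H _].
  rewrite <- Pz_dd_diag. now apply (Pz_dd_neq_0 z m rho c b).
Qed.

Lemma ball_root_cont (Q : C) : U Q -> cont_at (ball_root z m rho) Q.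
Proof.
  intros HQ. apply cont_at_lipschitz with (2 / c)%R.
  eapply nearC_mono; [intros y Hy | exact (nearC_of_open U Q HU HQ)].
  destruct (ball_root_spec y Hy) as [Ay By]. destruct (ball_root_spec Q HQ) as [AQ BQ].
  eapply Rle_trans; [apply (Pz_inv_lipschitz z m rho c b Hparams); auto |]. rewrite By, BQ. lra.
Qed.

Lemma ball_root_holo (Q : C) : U Q -> holo_at (ball_root z m rho) Q.
Proof.
  intros HQ. apply (holo_at_cubic_inverse z).
  - now apply ball_root_cont.
  - eapply nearC_mono; [intros y Hy | exact (nearC_of_open U Q HU HQ)]. apply (ball_root_spec y Hy).
  - now apply dPz_ball_root_neq_0.
Qed.

End BallRoot.

(** * Estimates for [z] near [1/2] *)

(* At [z = 1/2] one has [Q_-(z) = q0 / 18 ~ 0.0481 = - Q_+(z)]. The discs [V1] and [V0] have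
   diameter [0.049]; they contain [0] together with [Q_-(z)], resp. [Q_+(z)], and over them the
   roots starting at [1], resp. [0], stay in the balls [B(m1, rootR)], resp. [B(m0, rootR)]. *)
Definition z_radius : R := 1 / 10000.
Definition q0 : R := sqrt 3 / 2.
Definition m1 : R := 417 / 400.
Definition m0 : R := - 17 / 400.
Definition rootR : R := 43 / 500.
Definition dPz_lb : R := 63 / 100.
Definition lin_ub : R := 163 / 100.
Definition discR : R := 49 / 2000.
Definition V1 : C -> Prop := Cdisc (RtoC (3 / 125)) discR.
Definition V0 : C -> Prop := Cdisc (RtoC (- 3 / 125)) discR.
Definition Qp_radius : R := 1 / 5000.

Lemma q0_bounds : (866 / 1000 <= q0 <= 86605 / 100000)%R.
Proof.
  unfold q0. pose proof (sqrt_pos 3). pose proof (sqrt_sqrt 3 ltac:(lra)). split; nra.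
Qed.

Lemma q0_sq : (q0 * q0 = 3 / 4)%R.
Proof.
  unfold q0. replace (sqrt 3 / 2 * (sqrt 3 / 2))%R with (sqrt 3 * sqrt 3 / 4)%R by field.
  rewrite sqrt_sqrt by lra. field.
Qed.

Lemma Cmod_plus_le (a b : C) (A B : R) : (Cmod a <= A -> Cmod b <= B -> Cmod (a + b) <= A + B)%R.
Proof. intros. eapply Rle_trans; [apply Cmod_triangle | lra]. Qed.

Lemma Cmod_minus_le (a b : C) (A B : R) : (Cmod a <= A -> Cmod b <= B -> Cmod (a - b) <= A + B)%R.
Proof. intros. eapply Rle_trans; [apply Cmod_sub_le | lra]. Qed.

Lemma Cmod_mult_le (a b : C) (A B : R) : (Cmod a <= A -> Cmod b <= B -> Cmod (a * b) <= A * B)%R.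
Proof. intros. rewrite Cmod_mult. apply Rmult_le_compat; auto; apply Cmod_ge_0. Qed.

Lemma Cmod_div_le (a b : C) (A B : R) : (Cmod a <= A -> Cmod (/ b) <= B -> Cmod (a / b) <= A * B)%R.
Proof. apply Cmod_mult_le. Qed.

Lemma Cmod_opp_le (a : C) (A : R) : (Cmod a <= A -> Cmod (- a) <= A)%R.
Proof. now rewrite Cmod_opp. Qed.

Lemma Cmod_RtoC_le (r : R) : (Cmod (RtoC r) <= Rabs r)%R.
Proof. rewrite Cmod_R. apply Rle_refl. Qed.

Lemma Cmod_inv_RtoC_le (r : R) : r <> 0%R -> (Cmod (/ RtoC r) <= Rabs (/ r))%R.
Proof. intros H. rewrite Cmod_inv, Cmod_R, Rabs_inv by now apply RtoC_neq_0. apply Rle_refl. Qed.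

Ltac bound_Cmod :=
  first [ apply Cmod_plus_le; bound_Cmod | apply Cmod_minus_le; bound_Cmod
        | apply Cmod_div_le; bound_Cmod | apply Cmod_mult_le; bound_Cmod
        | apply Cmod_opp_le; bound_Cmod | apply Cmod_RtoC_le
        | apply Cmod_inv_RtoC_le; lra | apply Rle_refl ].

Ltac Rabs_numerals := repeat match goal with
  | |- context [Rabs (IZR ?n)] => rewrite (Rabs_right (IZR n)) by lra
  | |- context [Rabs (/ IZR ?n)] =>
      rewrite (Rabs_right (/ IZR n)) by (apply Rle_ge, Rlt_le, Rinv_0_lt_compat; lra)
  end.

Lemma re_im_close (a : C) (c e : R) : (Cmod (a - RtoC c) <= e)%R ->
  (c - e <= Re a <= c + e /\ Rabs (Im a) <= e)%R.
Proof.
  intros H. pose proof (re_le_Cmod (a - RtoC c)) as HRe. pose proof (Im_le_Cmod (a - RtoC c)) as HIm.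
  destruct a as [a1 a2]. simpl in *. replace (a2 + - 0)%R with a2 in * by ring.
  split; [| lra]. unfold Rabs in HRe; destruct Rcase_abs in HRe; lra.
Qed.

Section NearHalf.
Variable z : C.
Hypothesis Hz : Cdisc (RtoC (1 / 2)) z_radius z.

Let e := z - RtoC (1 / 2).
Let q := Csqrt (z * z - z + 1).

Lemma z_near_half : (Rabs (Re z - 1 / 2) < z_radius /\ Rabs (Im z) < z_radius)%R.
Proof.
  unfold Cdisc in Hz.
  pose proof (re_le_Cmod (z - RtoC (1 / 2))). pose proof (Im_le_Cmod (z - RtoC (1 / 2))).
  destruct z as [zr zi]. simpl in *. replace (zi + - 0)%R with zi in * by ring. unfold Rminus. split; lra.
Qed.

Lemma inverse_params_center (m : R) : m = m1 \/ m = m0 -> inverse_params z (RtoC m) rootR dPz_lb lin_ub.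
Proof.
  intros Hm. destruct z_near_half as [Hr Hi]. unfold z_radius in *. destruct z as [zr zi]. simpl in Hr, Hi.
  apply Rabs_def2 in Hr. apply Rabs_def2 in Hi.
  unfold inverse_params, rootR, dPz_lb, lin_ub. split; [lra |]. split; [lra |]. split.
  - eapply Rle_trans; [| apply Re_Cmod_lower]. unfold dPz. simpl.
    destruct Hm; subst; unfold m1, m0; nra.
  - split; [| lra]. eapply Rle_trans; [apply Cmod_le_Re_Im |]. simpl.
    destruct Hm; subst; unfold m1, m0; unfold Rabs; repeat destruct Rcase_abs; lra.
Qed.

Lemma sqrt_disc_close : (Cmod (q - RtoC q0) <= 2 * z_radius * z_radius)%R.
Proof.
  pose proof q0_bounds.
  assert (E : (q - RtoC q0) * (q + RtoC q0) = e * e).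
  { replace ((q - RtoC q0) * (q + RtoC q0)) with (q * q - RtoC q0 * RtoC q0) by ring.
    unfold q. rewrite Csqrt_sq, <- RtoC_mult.
    rewrite q0_sq.
    unfold e, RtoC. apply injective_projections; simpl; field. }
  assert (Hre : (q0 <= Cmod (q + RtoC q0))%R).
  { eapply Rle_trans; [| apply Re_Cmod_lower]. pose proof (Csqrt_Re_nonneg (z * z - z + 1)).
    change (Re (q + RtoC q0)) with (Re q + q0)%R. unfold q. lra. }
  assert (Hm : (Cmod (q - RtoC q0) * Cmod (q + RtoC q0) <= z_radius * z_radius)%R).
  { rewrite <- Cmod_mult, E, Cmod_mult. unfold Cdisc in Hz. unfold e.
    pose proof (Cmod_ge_0 (z - RtoC (1 / 2))). nra. }
  pose proof (Cmod_ge_0 (q - RtoC q0)). unfold z_radius in *. nra.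
Qed.

Lemma Q_minus_expansion : RtoC 27 * (Q_minus z - RtoC q0 / 18) =
  - (2 * e) * (e * e - 9 / 4) + 2 * (q - RtoC q0) * (e * e + 3 / 4) + 2 * RtoC q0 * (e * e).
Proof.
  transitivity (- (2 * e) * (e * e - 9 / 4) + 2 * (q - RtoC q0) * (e * e + 3 / 4) + 2 * RtoC q0 * (e * e)
                - q * (q * q - (z * z - z + 1))).
  - unfold Q_minus, w_minus, Pz, e, q. rewrite RtoC_div by lra. field.
  - unfold q. rewrite Csqrt_sq. ring.
Qed.

Lemma Q_plus_expansion : RtoC 27 * (Q_plus z + RtoC q0 / 18) =
  - (2 * e) * (e * e - 9 / 4) - 2 * (q - RtoC q0) * (e * e + 3 / 4) - 2 * RtoC q0 * (e * e).
Proof.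
  transitivity (- (2 * e) * (e * e - 9 / 4) - 2 * (q - RtoC q0) * (e * e + 3 / 4) - 2 * RtoC q0 * (e * e)
                + q * (q * q - (z * z - z + 1))).
  - unfold Q_plus, w_plus, Pz, e, q. rewrite RtoC_div by lra. field.
  - unfold q. rewrite Csqrt_sq. ring.
Qed.

Lemma Q_minus_close : (Cmod (Q_minus z - RtoC q0 / 18) <= z_radius)%R.
Proof.
  pose proof Q_minus_expansion as E. pose proof sqrt_disc_close as Hq. pose proof q0_bounds.
  assert (He : (Cmod e < z_radius)%R) by exact Hz.
  set (c := q - RtoC q0) in *. clearbody e c.
  assert (H27 : (Cmod (RtoC 27 * (Q_minus z - RtoC q0 / 18)) <= 27 * z_radius)%R).
  { rewrite E. eapply Rle_trans; [bound_Cmod |]. Rabs_numerals. rewrite (Rabs_right q0) by lra.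
    pose proof (Cmod_ge_0 e). pose proof (Cmod_ge_0 c). unfold z_radius in *. nra. }
  rewrite Cmod_mult, Cmod_R, Rabs_right in H27 by lra. lra.
Qed.

Lemma Q_plus_close : (Cmod (Q_plus z + RtoC q0 / 18) <= z_radius)%R.
Proof.
  pose proof Q_plus_expansion as E. pose proof sqrt_disc_close as Hq. pose proof q0_bounds.
  assert (He : (Cmod e < z_radius)%R) by exact Hz.
  set (c := q - RtoC q0) in *. clearbody e c.
  assert (H27 : (Cmod (RtoC 27 * (Q_plus z + RtoC q0 / 18)) <= 27 * z_radius)%R).
  { rewrite E. eapply Rle_trans; [bound_Cmod |]. Rabs_numerals. rewrite (Rabs_right q0) by lra.
    pose proof (Cmod_ge_0 e). pose proof (Cmod_ge_0 c). unfold z_radius in *. nra. }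
  rewrite Cmod_mult, Cmod_R, Rabs_right in H27 by lra. lra.
Qed.

Lemma partner_w_plus_close : (Cmod (partner z (w_plus z) - RtoC ((3 / 2 - 2 * q0) / 3)) <= z_radius)%R.
Proof.
  pose proof sqrt_disc_close as Hq. assert (He : (Cmod e < z_radius)%R) by exact Hz.
  replace (partner z (w_plus z) - RtoC ((3 / 2 - 2 * q0) / 3)) with ((e - 2 * (q - RtoC q0)) / 3)
    by (unfold partner, w_plus, e, q, RtoC; apply injective_projections; simpl; field).
  set (c := q - RtoC q0) in *. clearbody e c.
  eapply Rle_trans; [bound_Cmod |]. Rabs_numerals. unfold z_radius in *. lra.
Qed.

Lemma partner_w_minus_close : (Cmod (partner z (w_minus z) - RtoC ((3 / 2 + 2 * q0) / 3)) <= z_radius)%R.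
Proof.
  pose proof sqrt_disc_close as Hq. assert (He : (Cmod e < z_radius)%R) by exact Hz.
  replace (partner z (w_minus z) - RtoC ((3 / 2 + 2 * q0) / 3)) with ((e + 2 * (q - RtoC q0)) / 3)
    by (unfold partner, w_minus, e, q, RtoC; apply injective_projections; simpl; field).
  set (c := q - RtoC q0) in *. clearbody e c.
  eapply Rle_trans; [bound_Cmod |]. Rabs_numerals. unfold z_radius in *. lra.
Qed.

Lemma disc_inverse_cond (m c : R) : (m = m1 /\ c = 3 / 125 \/ m = m0 /\ c = - 3 / 125)%R ->
  forall Q, Cdisc (RtoC c) discR Q -> (Cmod (Pz z (RtoC m) - Q) <= dPz_lb * rootR / 2)%R.
Proof.
  intros Hm Q HQ. unfold Cdisc in HQ.
  replace (Pz z (RtoC m) - Q) with ((Pz z (RtoC m) - RtoC c) - (Q - RtoC c)) by ring.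
  eapply Rle_trans; [apply Cmod_sub_le |].
  assert (Cmod (Pz z (RtoC m) - RtoC c) <= 5 / 100000)%R.
  { destruct z_near_half as [Hr Hi]. unfold z_radius in *. destruct z as [zr zi]. simpl in Hr, Hi.
    apply Rabs_def2 in Hr. apply Rabs_def2 in Hi.
    eapply Rle_trans; [apply Cmod_le_Re_Im |]. unfold Pz. simpl.
    destruct Hm as [[-> ->] | [-> ->]]; unfold m1, m0, Rabs; repeat destruct Rcase_abs; nra. }
  unfold discR, dPz_lb, rootR in *. lra.
Qed.

Lemma Q_minus_in_V1 : V1 (Q_minus z).
Proof.
  pose proof Q_minus_close. pose proof q0_bounds. unfold V1, Cdisc.
  replace (Q_minus z - RtoC (3 / 125)) with ((Q_minus z - RtoC q0 / 18) + RtoC (q0 / 18 - 3 / 125))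
    by (rewrite RtoC_minus, RtoC_div by lra; ring).
  eapply Rle_lt_trans; [apply Cmod_triangle |]. rewrite Cmod_R.
  unfold Rabs; destruct Rcase_abs; unfold discR, z_radius in *; lra.
Qed.

Lemma Q_plus_nbhd_in_V0 (Q : C) : (Cmod (Q - Q_plus z) < Qp_radius)%R -> V0 Q.
Proof.
  intros HQ. pose proof Q_plus_close. pose proof q0_bounds. unfold V0, Cdisc.
  replace (Q - RtoC (- 3 / 125)) with ((Q - Q_plus z) + (Q_plus z + RtoC q0 / 18) - RtoC (q0 / 18 - 3 / 125))
    by (rewrite RtoC_minus, !RtoC_div by lra; field).
  eapply Rle_lt_trans; [apply Cmod_sub_le |].
  eapply Rle_lt_trans; [apply Rplus_le_compat_r, Cmod_triangle |]. rewrite Cmod_R.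
  unfold Rabs; destruct Rcase_abs; unfold discR, z_radius, Qp_radius in *; lra.
Qed.

Lemma Q_plus_neq_0 : Q_plus z <> 0.
Proof.
  intros E. pose proof Q_plus_close as H. pose proof q0_bounds.
  rewrite E, Cplus_0_l, <- RtoC_div, Cmod_R, Rabs_right in H by lra. unfold z_radius in *. lra.
Qed.

Lemma partner_w_plus_in_ball : (Cmod (partner z (w_plus z) - RtoC m0) <= rootR)%R.
Proof.
  pose proof partner_w_plus_close. pose proof q0_bounds.
  replace (partner z (w_plus z) - RtoC m0) with
    ((partner z (w_plus z) - RtoC ((3 / 2 - 2 * q0) / 3)) + RtoC ((3 / 2 - 2 * q0) / 3 - m0))
    by (rewrite RtoC_minus; ring).
  eapply Rle_trans; [apply Cmod_triangle |]. rewrite Cmod_R.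
  unfold Rabs; destruct Rcase_abs; unfold m0, rootR, z_radius in *; lra.
Qed.
End NearHalf.

Section BallZero.
Variable z : C.
Hypothesis Hz : Cdisc (RtoC (1 / 2)) z_radius z.

Lemma dPz_m0_bounds : (63 / 100 <= Re (dPz z (RtoC m0)) /\ Rabs (Im (dPz z (RtoC m0))) <= 1 / 5000)%R.
Proof.
  destruct (z_near_half z Hz) as [Hr Hi]. unfold z_radius in *. destruct z as [zr zi]. simpl in Hr, Hi.
  apply Rabs_def2 in Hr. apply Rabs_def2 in Hi. unfold dPz, m0. simpl.
  split; [nra |]. unfold Rabs; destruct Rcase_abs; nra.
Qed.

Lemma root_ratio_Re_pos (x : C) : (Cmod (x - RtoC m0) <= rootR)%R ->
  (0 < Re (3 * (partner z (w_minus z) - x) / Pz_dd z x (partner z (w_plus z))))%R.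
Proof.
  intros Hx. apply Re_div_pos.
  pose proof (partner_w_minus_close z Hz) as Hxss. pose proof q0_bounds.
  pose proof (Pz_dd_near_dPz z (RtoC m0) rootR dPz_lb lin_ub (inverse_params_center z Hz m0 (or_intror eq_refl))
                x _ Hx (partner_w_plus_in_ball z Hz)) as HM.
  apply re_im_close in Hxss. apply re_im_close in Hx. pose proof dPz_m0_bounds as Hd.
  set (D := Pz_dd z x (partner z (w_plus z))) in *. set (c := dPz z (RtoC m0)) in *.
  pose proof (re_le_Cmod (D - c)) as HRe. pose proof (Im_le_Cmod (D - c)) as HIm.
  change (Re (D - c)) with (Re D - Re c)%R in HRe. change (Im (D - c)) with (Im D - Im c)%R in HIm.
  rewrite re_scal_l, im_scal_l.
  change (Re (partner z (w_minus z) - x)) with (Re (partner z (w_minus z)) - Re x)%R.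
  change (Im (partner z (w_minus z) - x)) with (Im (partner z (w_minus z)) - Im x)%R.
  set (a1 := (3 * (Re (partner z (w_minus z)) - Re x))%R).
  set (a2 := (3 * (Im (partner z (w_minus z)) - Im x))%R).
  unfold dPz_lb, rootR, m0, z_radius in *.
  assert (Ha1 : (31 / 10 <= a1)%R) by (unfold a1; lra).
  assert (Ha2 : (Rabs a2 <= 26 / 100)%R) by (unfold a2, Rabs in *; repeat destruct Rcase_abs; lra).
  assert (Hb1 : (3 / 10 <= Re D)%R) by (unfold Rabs in *; repeat destruct Rcase_abs; lra).
  assert (Hb2 : (Rabs (Im D) <= 33 / 100)%R) by (unfold Rabs in *; repeat destruct Rcase_abs; lra).
  assert (P1 : (31 / 10 * (3 / 10) <= a1 * Re D)%R) by (apply Rmult_le_compat; lra).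
  assert (P2 : (Rabs (a2 * Im D) <= 26 / 100 * (33 / 100))%R)
    by (rewrite Rabs_mult; apply Rmult_le_compat; auto; apply Rabs_pos).
  pose proof (Rle_abs (- (a2 * Im D))) as Hneg. rewrite Rabs_Ropp in Hneg. lra.
Qed.

Lemma three_root_gap (x : C) : (Cmod (x - RtoC m0) <= rootR)%R -> z + 1 - 3 * x <> 0.
Proof.
  intros Hx E. apply re_im_close in Hx. destruct (z_near_half z Hz) as [Hr _].
  assert (H : Re (z + 1 - 3 * x) = 0%R) by (rewrite E; reflexivity).
  change (Re (z + 1 - 3 * x)) with (Re z + 1 - Re (3 * x))%R in H. rewrite re_scal_l in H.
  unfold m0, rootR, z_radius, Rabs in *; repeat destruct Rcase_abs; lra.
Qed.

Lemma one_minus_z_neq_0 : 1 - z <> 0.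
Proof.
  intros E. destruct (z_near_half z Hz) as [Hr _].
  assert (H : Re (1 - z) = 0%R) by (rewrite E; reflexivity).
  change (Re (1 - z)) with (1 - Re z)%R in H. unfold z_radius, Rabs in *; destruct Rcase_abs; lra.
Qed.
End BallZero.

Lemma V1_0 : V1 0.
Proof.
  unfold V1, Cdisc. replace (0 - RtoC (3 / 125)) with (RtoC (- (3 / 125))) by (rewrite RtoC_opp; ring).
  rewrite Cmod_R, Rabs_left by lra. unfold discR. lra.
Qed.

Lemma V0_0 : V0 0.
Proof.
  unfold V0, Cdisc. replace (0 - RtoC (- 3 / 125)) with (RtoC (3 / 125)) by (rewrite !RtoC_div by lra; field).
  rewrite Cmod_R, Rabs_right by lra. unfold discR. lra.
Qed.

(** * The germ [H] as [/ dPz z w1] *)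

Lemma root_germ_near (z c : C) (rho : R) (w : C -> C) : (0 < rho)%R -> root_germ z rho c w ->
  forall eps, (0 < eps)%R -> nearC 0 (fun Q => Cmod (w Q - c) < eps /\ Pz z (w Q) = Q)%R.
Proof.
  intros Hr [Hh [Hroot H0]] eps He.
  assert (Hd : Cdisc 0 rho 0) by (apply Cdisc_0_center; rewrite Cmod_0; exact Hr).
  pose proof (holo_at_cont_at w 0 (ex_derive_holo_at w 0 (Hh 0 Hd)) eps He) as Hc.
  rewrite H0 in Hc.
  eapply nearC_mono2; [intros Q H1 H2; split; [exact H1 | exact (Hroot Q H2)] | exact Hc |].
  exact (nearC_Cdisc 0 rho 0 Hd).
Qed.

Lemma far_apart (a b c d : C) (r : R) :
  (Cmod (a - c) < r)%R -> (Cmod (b - d) < r)%R -> (2 * r <= Cmod (c - d))%R -> a <> b.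
Proof.
  intros H1 H2 H3 E. subst b.
  replace (c - d) with (- (a - c) + (a - d)) in H3 by ring.
  pose proof (Cmod_triangle (- (a - c)) (a - d)) as Htri. rewrite Cmod_opp in Htri. lra.
Qed.

(* Near [Q = 0] the three germs stay apart, and [g] must coincide with [w1] by injectivity of
   [Pz z] on [B(m1, rootR)]; the product of root differences is then [dPz z (w1 Q)]. *)
Lemma H_germ_eq_inv_dPz (z : C) (rho : R) (w0 w1 w2 g : C -> C) :
  Cdisc (RtoC (1 / 2)) z_radius z -> (0 < rho)%R ->
  root_germ z rho 0 w0 -> root_germ z rho 1 w1 -> root_germ z rho z w2 ->
  cont_at g 0 -> g 0 = 1 -> nearC 0 (fun Q => Pz z (g Q) = Q) ->
  nearC 0 (fun Q => / ((w1 Q - w0 Q) * (w1 Q - w2 Q)) = / dPz z (g Q)).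
Proof.
  intros Hz Hr G0 G1 G2 Hg Hg0 Hgroot.
  set (r := (1 / 25)%R). assert (Hr0 : (0 < r)%R) by (unfold r; lra).
  assert (Hgr := Hg r Hr0). rewrite Hg0 in Hgr.
  pose proof (root_germ_near z 0 rho w0 Hr G0 r Hr0) as N0.
  pose proof (root_germ_near z 1 rho w1 Hr G1 r Hr0) as N1.
  pose proof (root_germ_near z z rho w2 Hr G2 r Hr0) as N2.
  eapply nearC_mono2; [intros Q HA HB |
    exact (nearC_and _ _ _ N0 N1) | exact (nearC_and _ _ _ (nearC_and _ _ _ N2 Hgr) Hgroot)].
  simpl in HA, HB. destruct HA as [[C0 P0] [C1 P1]], HB as [[[C2 P2] Cg] Pg].
  destruct (z_near_half z Hz) as [Hzr Hzi].
  pose proof (re_le_Cmod z) as Hz0. pose proof (re_le_Cmod (1 - z)) as Hz1.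
  change (Re (1 - z)) with (1 - Re z)%R in Hz1.
  assert (Hin : forall w, (Cmod (w - 1) < r)%R -> (Cmod (w - RtoC m1) <= rootR)%R).
  { intros w Hw. replace (w - RtoC m1) with ((w - 1) + RtoC (1 - m1)) by (rewrite RtoC_minus; ring).
    eapply Rle_trans; [apply Cmod_triangle |]. rewrite Cmod_R.
    unfold r, m1, rootR in *. unfold Rabs; destruct Rcase_abs; lra. }
  assert (Ew : w1 Q = g Q).
  { apply (Pz_inj_ball z (RtoC m1) rootR dPz_lb lin_ub (inverse_params_center z Hz m1 (or_introl eq_refl)));
      auto. now rewrite P1, Pg. }
  rewrite <- Ew, (dPz_three_roots z (w0 Q) (w1 Q) (w2 Q)); [reflexivity | congruence | congruence | | |].
  - apply (far_apart _ _ 0 1 r); auto. replace (0 - 1) with (- (1)) by ring.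
    rewrite Cmod_opp, Cmod_1. unfold r; lra.
  - apply (far_apart _ _ z 1 r); auto. replace (z - 1) with (- (1 - z)) by ring. rewrite Cmod_opp.
    unfold r, z_radius, Rabs in *. repeat destruct Rcase_abs; lra.
  - apply (far_apart _ _ 0 z r); auto. replace (0 - z) with (- z) by ring. rewrite Cmod_opp.
    unfold r, z_radius, Rabs in *. repeat destruct Rcase_abs; lra.
Qed.

Lemma continues_germ_of_near (U : C -> Prop) (F H : C -> C) :
  U 0 -> Copen U -> (forall Q, U Q -> holo_at F Q) -> nearC 0 (fun Q => F Q = H Q) ->
  continues_germ U F H.
Proof.
  intros H0 HU HF E. split; [exact H0 |]. split; [exact HU |]. split.
  - intros Q HQ. exact (holo_at_ex_derive F Q (HF Q HQ)).
  - exact (nearC_and _ _ _ (nearC_of_open U 0 HU H0) E).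
Qed.

(** * Regularity at [Q_-] *)

Definition root_near_one (z : C) : C -> C := ball_root z (RtoC m1) rootR.

Section RootNearOne.
Variable z : C.
Hypothesis Hz : Cdisc (RtoC (1 / 2)) z_radius z.

Let Hparams := inverse_params_center z Hz m1 (or_introl eq_refl).
Let Hcond := disc_inverse_cond z Hz m1 (3 / 125) (or_introl (conj eq_refl eq_refl)).

Lemma root_near_one_spec (Q : C) : V1 Q -> Pz z (root_near_one z Q) = Q.
Proof. intros HQ. exact (proj2 (ball_root_spec z _ _ _ _ V1 Hparams Hcond Q HQ)). Qed.

Lemma root_near_one_at_0 : root_near_one z 0 = 1.
Proof.
  apply (ball_root_unique z _ _ _ _ V1 Hparams Hcond); [exact V1_0 | | apply Pz_at_1].
  replace (1 - RtoC m1) with (RtoC (1 - m1)) by (rewrite RtoC_minus; reflexivity).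
  rewrite Cmod_R. unfold m1, rootR. rewrite Rabs_left by lra. lra.
Qed.

Lemma root_near_one_cont (Q : C) : V1 Q -> cont_at (root_near_one z) Q.
Proof. exact (ball_root_cont z _ _ _ _ V1 Hparams (Cdisc_open _ _) Hcond Q). Qed.

Lemma inv_dPz_root_near_one_holo (Q : C) : V1 Q -> holo_at (fun Q => / dPz z (root_near_one z Q)) Q.
Proof.
  intros HQ. apply holo_at_inv.
  - apply holo_at_dPz. exact (ball_root_holo z _ _ _ _ V1 Hparams (Cdisc_open _ _) Hcond Q HQ).
  - exact (dPz_ball_root_neq_0 z _ _ _ _ V1 Hparams Hcond Q HQ).
Qed.
End RootNearOne.

Lemma H_regular_at_Q_minus (z : C) (rho : R) (w0 w1 w2 : C -> C) :
  Cdisc (RtoC (1 / 2)) z_radius z -> (0 < rho)%R ->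
  root_germ z rho 0 w0 -> root_germ z rho 1 w1 -> root_germ z rho z w2 ->
  exists (U : C -> Prop) (F : C -> C),
    Cconvex U /\ continues_germ U F (fun Q => / ((w1 Q - w0 Q) * (w1 Q - w2 Q))) /\ U (Q_minus z).
Proof.
  intros Hz Hr G0 G1 G2.
  exists V1, (fun Q => / dPz z (root_near_one z Q)).
  split; [apply Cdisc_convex |]. split; [| exact (Q_minus_in_V1 z Hz)].
  apply continues_germ_of_near; [exact V1_0 | apply Cdisc_open | now apply inv_dPz_root_near_one_holo |].
  eapply nearC_mono; [intros Q HQ; symmetry; exact HQ |].
  apply (H_germ_eq_inv_dPz z rho w0 w1 w2 _ Hz Hr G0 G1 G2).
  - exact (root_near_one_cont z Hz 0 V1_0).
  - exact (root_near_one_at_0 z Hz).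
  - eapply nearC_mono; [intros Q HQ; exact (root_near_one_spec z Hz Q HQ) |].
    exact (nearC_of_open _ 0 (Cdisc_open _ _) V1_0).
Qed.

(** * The square-root singularity at [Q_+] *)

Definition root_near_zero (z : C) : C -> C := ball_root z (RtoC m0) rootR.

(* With [g = root_near_zero z Q]: [Q - Q_+ = (g - x_+) Pz_dd z g x_+] and
   [resid_disc z g = 3 (g - x_+) (x_- - g)], where [x_+-] are the partners of [w_+-];
   hence [resid_disc z g = (Q - Q_+) * branch_ratio z Q], with [branch_ratio] regular at [Q_+]. *)
Definition branch_ratio (z Q : C) : C :=
  3 * (partner z (w_minus z) - root_near_zero z Q) / Pz_dd z (root_near_zero z Q) (partner z (w_plus z)).

Definition sqrt_ratio (z Q : C) : C := Csqrt (branch_ratio z Q).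

(* A square root of [Q - Q_+]: the rotation by [conj Q_+] maps the half-plane
   [Re ((Q - Q_+) conj Q_+) < 0] into [Re > 0], where [Csqrt] is continuous. *)
Definition sqrt_shift (z Q : C) : C :=
  Csqrt (- (Q - Q_plus z) * Cconj (Q_plus z)) * Csqrt (- / Cconj (Q_plus z)).

(* The sign [+-1] selecting the branch through [w1(0) = 1]. *)
Definition branch_sign (z : C) : C := (1 - z) / (sqrt_shift z 0 * sqrt_ratio z 0).

Definition sqrt_Q (z Q : C) : C := branch_sign z * sqrt_shift z Q.

Definition w1_cont (z Q : C) : C := (z + 1 - root_near_zero z Q + sqrt_Q z Q * sqrt_ratio z Q) / 2.

Definition regular_part (z Q : C) : C := - / (2 * dPz z (root_near_zero z Q)).

Definition singular_coef (z Q : C) : C :=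
  (z + 1 - 3 * root_near_zero z Q) / (2 * dPz z (root_near_zero z Q) * sqrt_ratio z Q).

Section RootNearZero.
Variable z : C.
Hypothesis Hz : Cdisc (RtoC (1 / 2)) z_radius z.

Let Hparams := inverse_params_center z Hz m0 (or_intror eq_refl).
Let Hcond := disc_inverse_cond z Hz m0 (- 3 / 125) (or_intror (conj eq_refl eq_refl)).

Lemma root_near_zero_spec (Q : C) : V0 Q ->
  (Cmod (root_near_zero z Q - RtoC m0) <= rootR)%R /\ Pz z (root_near_zero z Q) = Q.
Proof. exact (ball_root_spec z _ _ _ _ V0 Hparams Hcond Q). Qed.

Lemma root_near_zero_holo (Q : C) : V0 Q -> holo_at (root_near_zero z) Q.
Proof. exact (ball_root_holo z _ _ _ _ V0 Hparams (Cdisc_open _ _) Hcond Q). Qed.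

Lemma dPz_root_near_zero_neq_0 (Q : C) : V0 Q -> dPz z (root_near_zero z Q) <> 0.
Proof. exact (dPz_ball_root_neq_0 z _ _ _ _ V0 Hparams Hcond Q). Qed.

Lemma root_near_zero_at_0 : root_near_zero z 0 = 0.
Proof.
  apply (ball_root_unique z _ _ _ _ V0 Hparams Hcond); [exact V0_0 | | apply Pz_at_0].
  replace (0 - RtoC m0) with (RtoC (- m0)) by (rewrite RtoC_opp; ring).
  rewrite Cmod_R. unfold m0, rootR. rewrite Rabs_right by lra. lra.
Qed.

Lemma Pz_dd_partner_neq_0 (Q : C) : V0 Q -> Pz_dd z (root_near_zero z Q) (partner z (w_plus z)) <> 0.
Proof.
  intros HQ. apply (Pz_dd_neq_0 z _ _ _ _ Hparams); [apply root_near_zero_spec, HQ |].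
  exact (partner_w_plus_in_ball z Hz).
Qed.

Lemma branch_ratio_Re_pos (Q : C) : V0 Q -> (0 < Re (branch_ratio z Q))%R.
Proof. intros HQ. apply (root_ratio_Re_pos z Hz). apply root_near_zero_spec, HQ. Qed.

Lemma sqrt_ratio_neq_0 (Q : C) : V0 Q -> sqrt_ratio z Q <> 0.
Proof. intros HQ. now apply Csqrt_neq_0, branch_ratio_Re_pos. Qed.

Lemma branch_ratio_holo (Q : C) : V0 Q -> holo_at (branch_ratio z) Q.
Proof.
  intros HQ. unfold branch_ratio. apply holo_at_div.
  - apply holo_at_scal, holo_at_minus; [apply holo_at_const | now apply root_near_zero_holo].
  - now apply holo_at_Pz_dd, root_near_zero_holo.
  - now apply Pz_dd_partner_neq_0.
Qed.

Lemma sqrt_ratio_cont (Q : C) : V0 Q -> cont_at (sqrt_ratio z) Q.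
Proof.
  intros HQ. apply (cont_at_comp (branch_ratio z) Csqrt).
  - now apply holo_at_cont_at, branch_ratio_holo.
  - now apply cont_at_Csqrt, Csqrt_Re_pos, branch_ratio_Re_pos.
Qed.

Lemma sqrt_ratio_holo (Q : C) : V0 Q -> holo_at (sqrt_ratio z) Q.
Proof.
  intros HQ. apply holo_at_continuous_sqrt with (branch_ratio z).
  - now apply sqrt_ratio_cont.
  - apply nearC_always. intros y. apply Csqrt_sq.
  - now apply sqrt_ratio_neq_0.
  - now apply branch_ratio_holo.
Qed.

Lemma sqrt_shift_sq (Q : C) : sqrt_shift z Q * sqrt_shift z Q = Q - Q_plus z.
Proof.
  unfold sqrt_shift.
  set (a := Csqrt (- (Q - Q_plus z) * Cconj (Q_plus z))). set (b := Csqrt (- / Cconj (Q_plus z))).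
  replace (a * b * (a * b)) with ((a * a) * (b * b)) by ring. unfold a, b. rewrite !Csqrt_sq.
  field. now apply Cconj_neq_0, Q_plus_neq_0.
Qed.

Lemma resid_disc_root_near_zero (Q : C) : V0 Q ->
  (sqrt_shift z Q * sqrt_ratio z Q) * (sqrt_shift z Q * sqrt_ratio z Q) = resid_disc z (root_near_zero z Q).
Proof.
  intros HQ.
  replace ((sqrt_shift z Q * sqrt_ratio z Q) * (sqrt_shift z Q * sqrt_ratio z Q))
    with ((sqrt_shift z Q * sqrt_shift z Q) * (sqrt_ratio z Q * sqrt_ratio z Q)) by ring.
  rewrite sqrt_shift_sq. unfold sqrt_ratio. rewrite Csqrt_sq.
  destruct (root_near_zero_spec Q HQ) as [_ Hroot].
  rewrite <- Hroot at 1. rewrite Q_plus_partner, Pz_sub, resid_disc_factor. unfold branch_ratio.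
  field. now apply Pz_dd_partner_neq_0.
Qed.

Lemma sqrt_shift_0_neq_0 : sqrt_shift z 0 <> 0.
Proof.
  intros E. apply (Q_plus_neq_0 z Hz). pose proof (sqrt_shift_sq 0) as H. rewrite E in H.
  replace (Q_plus z) with (- (0 - Q_plus z)) by ring. rewrite <- H. ring.
Qed.

Lemma branch_sign_sq : branch_sign z * branch_sign z = 1.
Proof.
  pose proof sqrt_shift_0_neq_0. pose proof (sqrt_ratio_neq_0 0 V0_0).
  pose proof (resid_disc_root_near_zero 0 V0_0) as Hdisc.
  rewrite root_near_zero_at_0 in Hdisc. unfold resid_disc in Hdisc.
  transitivity ((1 - z) * (1 - z) / ((sqrt_shift z 0 * sqrt_ratio z 0) * (sqrt_shift z 0 * sqrt_ratio z 0)));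
    [unfold branch_sign; field; auto |].
  assert (Hz1 : z - 1 <> 0).
  { intros E. apply (one_minus_z_neq_0 z Hz). replace (1 - z) with (- (z - 1)) by ring. rewrite E. ring. }
  rewrite Hdisc. field. exact Hz1.
Qed.

Lemma sqrt_Q_sq (Q : C) : sqrt_Q z Q * sqrt_Q z Q = Q - Q_plus z.
Proof.
  unfold sqrt_Q. rewrite <- sqrt_shift_sq.
  transitivity ((branch_sign z * branch_sign z) * (sqrt_shift z Q * sqrt_shift z Q)); [ring |].
  rewrite branch_sign_sq. ring.
Qed.

Lemma resid_disc_sqrt_Q (Q : C) : V0 Q ->
  (sqrt_Q z Q * sqrt_ratio z Q) * (sqrt_Q z Q * sqrt_ratio z Q) = resid_disc z (root_near_zero z Q).
Proof.
  intros HQ. rewrite <- resid_disc_root_near_zero by exact HQ. unfold sqrt_Q.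
  transitivity ((branch_sign z * branch_sign z) *
                ((sqrt_shift z Q * sqrt_ratio z Q) * (sqrt_shift z Q * sqrt_ratio z Q))); [ring |].
  rewrite branch_sign_sq. ring.
Qed.

Lemma w1_cont_root (Q : C) : V0 Q -> Pz z (w1_cont z Q) = Q.
Proof.
  intros HQ. unfold w1_cont. rewrite (Pz_other_root z _ _ (resid_disc_sqrt_Q Q HQ)).
  apply root_near_zero_spec, HQ.
Qed.

Lemma w1_cont_at_0 : w1_cont z 0 = 1.
Proof.
  pose proof sqrt_shift_0_neq_0. pose proof (sqrt_ratio_neq_0 0 V0_0).
  unfold w1_cont, sqrt_Q, branch_sign. rewrite root_near_zero_at_0. field. auto.
Qed.
End RootNearZero.

Lemma nearC_Re_neg (f : C -> C) (x : C) :
  cont_at f x -> (Re (f x) < 0)%R -> nearC x (fun y => Re (f y) < 0)%R.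
Proof.
  intros Hf Hx. eapply nearC_mono; [intros y Hy | exact (Hf (- Re (f x))%R ltac:(lra))]. simpl in Hy.
  pose proof (re_le_Cmod (f y - f x)) as HRe.
  change (Re (f y - f x)) with (Re (f y) - Re (f x))%R in HRe.
  pose proof (Rle_abs (Re (f y) - Re (f x))). lra.
Qed.

Definition halfplane (z Q : C) : Prop := V0 Q /\ (Re ((Q - Q_plus z) * Cconj (Q_plus z)) < 0)%R.

Section HalfPlane.
Variable z : C.
Hypothesis Hz : Cdisc (RtoC (1 / 2)) z_radius z.

Lemma halfplane_open : Copen (halfplane z).
Proof.
  intros Q [HV HRe]. apply nearC_and; [exact (nearC_Cdisc _ _ Q HV) |].
  apply (nearC_Re_neg (fun y => (y - Q_plus z) * Cconj (Q_plus z))); [| exact HRe].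
  apply cont_at_mult; [apply cont_at_minus; [apply cont_at_id | apply cont_at_const] | apply cont_at_const].
Qed.

Lemma halfplane_convex : Cconvex (halfplane z).
Proof.
  intros x y t [Hx1 Hx2] [Hy1 Hy2] Ht. split; [now apply Cdisc_convex |].
  set (a := (x - Q_plus z) * Cconj (Q_plus z)) in *. set (b := (y - Q_plus z) * Cconj (Q_plus z)) in *.
  replace ((x + RtoC t * (y - x) - Q_plus z) * Cconj (Q_plus z)) with (RtoC (1 - t) * a + RtoC t * b)
    by (unfold a, b; rewrite RtoC_minus; ring).
  change (Re (RtoC (1 - t) * a + RtoC t * b)) with (Re (RtoC (1 - t) * a) + Re (RtoC t * b))%R.
  rewrite !re_scal_l. destruct (Req_dec t 0) as [-> | Ht0]; nra.
Qed.

Lemma halfplane_segment (t : R) : (0 <= t < 1)%R -> halfplane z (RtoC t * Q_plus z).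
Proof.
  intros Ht. split.
  - replace (RtoC t * Q_plus z) with (0 + RtoC t * (Q_plus z - 0)) by ring.
    apply Cdisc_convex; [exact V0_0 | | lra].
    apply (Q_plus_nbhd_in_V0 z Hz). replace (Q_plus z - Q_plus z) with (RtoC 0) by ring.
    rewrite Cmod_0. unfold Qp_radius. lra.
  - pose proof (Q_plus_neq_0 z Hz) as H. destruct (Q_plus z) as [a b]. unfold Cconj. simpl.
    assert (0 < a * a + b * b)%R.
    { destruct (Req_dec a 0), (Req_dec b 0); subst; try nra. exfalso; now apply H. }
    nra.
Qed.

Lemma halfplane_0 : halfplane z 0.
Proof. replace (RtoC 0) with (RtoC 0 * Q_plus z) by ring. apply halfplane_segment. lra. Qed.

Lemma sqrt_Q_cont (Q : C) : halfplane z Q -> cont_at (sqrt_Q z) Q.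
Proof.
  intros [_ HRe]. unfold sqrt_Q, sqrt_shift. apply cont_at_scal, cont_at_mult; [| apply cont_at_const].
  apply (cont_at_comp (fun y => - (y - Q_plus z) * Cconj (Q_plus z)) Csqrt).
  - apply cont_at_mult; [| apply cont_at_const].
    apply cont_at_opp, cont_at_minus; [apply cont_at_id | apply cont_at_const].
  - apply cont_at_Csqrt, Csqrt_Re_pos.
    replace (- (Q - Q_plus z) * Cconj (Q_plus z)) with (- ((Q - Q_plus z) * Cconj (Q_plus z))) by ring.
    change (Re (- ((Q - Q_plus z) * Cconj (Q_plus z)))) with (- Re ((Q - Q_plus z) * Cconj (Q_plus z)))%R.
    lra.
Qed.

Lemma sqrt_Q_neq_0 (Q : C) : halfplane z Q -> sqrt_Q z Q <> 0.
Proof.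
  intros [_ HRe] E. pose proof (sqrt_Q_sq z Hz Q) as H. rewrite E, Cmult_0_l in H.
  rewrite <- H, Cmult_0_l in HRe. simpl in HRe. lra.
Qed.

Lemma w1_cont_cont (Q : C) : halfplane z Q -> cont_at (w1_cont z) Q.
Proof.
  intros HQ. pose proof HQ as [HV _]. unfold w1_cont. apply cont_at_mult; [| apply cont_at_const].
  apply cont_at_plus; [apply cont_at_minus; [apply cont_at_const |] | apply cont_at_mult].
  - now apply holo_at_cont_at, root_near_zero_holo.
  - now apply sqrt_Q_cont.
  - now apply sqrt_ratio_cont.
Qed.

Lemma dPz_w1_cont_neq_0 (Q : C) : halfplane z Q -> dPz z (w1_cont z Q) <> 0.
Proof.
  intros HQ. pose proof HQ as [HV _]. unfold w1_cont.
  pose proof (resid_disc_sqrt_Q z Hz Q HV) as Hd.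
  rewrite (dPz_other_root z _ _ Hd). apply Cmult_neq_0.
  - intros E. apply (dPz_root_near_zero_neq_0 z Hz Q HV).
    rewrite <- (other_root_factors z _ _ Hd), E. ring.
  - apply Cmult_neq_0; [now apply sqrt_Q_neq_0 | now apply sqrt_ratio_neq_0].
Qed.

Lemma w1_cont_holo (Q : C) : halfplane z Q -> holo_at (w1_cont z) Q.
Proof.
  intros HQ. apply (holo_at_cubic_inverse z); [now apply w1_cont_cont | | now apply dPz_w1_cont_neq_0].
  apply (nearC_mono Q (halfplane z)); [| exact (halfplane_open Q HQ)].
  intros y Hy. exact (w1_cont_root z Hz y (proj1 Hy)).
Qed.

Lemma inv_dPz_w1_cont_expansion (Q : C) : halfplane z Q ->
  / dPz z (w1_cont z Q) = regular_part z Q + singular_coef z Q / sqrt_Q z Q.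
Proof.
  intros HQ. pose proof HQ as [HV _]. apply inv_dPz_other_root.
  - exact (resid_disc_sqrt_Q z Hz Q HV).
  - exact (dPz_root_near_zero_neq_0 z Hz Q HV).
  - now apply sqrt_Q_neq_0.
  - now apply sqrt_ratio_neq_0.
Qed.
End HalfPlane.

Section AtQplus.
Variable z : C.
Hypothesis Hz : Cdisc (RtoC (1 / 2)) z_radius z.

Lemma two_dPz_root_near_zero_neq_0 (Q : C) : V0 Q -> 2 * dPz z (root_near_zero z Q) <> 0.
Proof.
  intros HQ. apply Cmult_neq_0; [apply RtoC_neq_0; lra | exact (dPz_root_near_zero_neq_0 z Hz Q HQ)].
Qed.

Lemma regular_part_holo (Q : C) : V0 Q -> holo_at (regular_part z) Q.
Proof.
  intros HQ. unfold regular_part. apply holo_at_opp, holo_at_inv.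
  - apply holo_at_scal, holo_at_dPz, (root_near_zero_holo z Hz Q HQ).
  - now apply two_dPz_root_near_zero_neq_0.
Qed.

Lemma singular_coef_holo (Q : C) : V0 Q -> holo_at (singular_coef z) Q.
Proof.
  intros HQ. pose proof (root_near_zero_holo z Hz Q HQ). unfold singular_coef. apply holo_at_div.
  - apply holo_at_minus; [apply holo_at_const | now apply holo_at_scal].
  - apply holo_at_mult; [now apply holo_at_scal, holo_at_dPz | exact (sqrt_ratio_holo z Hz Q HQ)].
  - apply Cmult_neq_0; [now apply two_dPz_root_near_zero_neq_0 | exact (sqrt_ratio_neq_0 z Hz Q HQ)].
Qed.

Lemma V0_Q_plus : V0 (Q_plus z).
Proof.
  apply (Q_plus_nbhd_in_V0 z Hz). replace (Q_plus z - Q_plus z) with (RtoC 0) by ring.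
  rewrite Cmod_0. unfold Qp_radius. lra.
Qed.

Lemma singular_coef_Q_plus_neq_0 : singular_coef z (Q_plus z) <> 0.
Proof.
  unfold singular_coef. apply Cmult_neq_0.
  - apply (three_root_gap z Hz). apply (root_near_zero_spec z Hz), V0_Q_plus.
  - apply Cinv_neq_0, Cmult_neq_0; [exact (two_dPz_root_near_zero_neq_0 _ V0_Q_plus) |].
    exact (sqrt_ratio_neq_0 z Hz _ V0_Q_plus).
Qed.
End AtQplus.

Lemma H_singular_at_Q_plus (z : C) (rho : R) (w0 w1 w2 : C -> C) :
  Cdisc (RtoC (1 / 2)) z_radius z -> (0 < rho)%R ->
  root_germ z rho 0 w0 -> root_germ z rho 1 w1 -> root_germ z rho z w2 ->
  continues_germ (halfplane z) (fun Q => / dPz z (w1_cont z Q))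
    (fun Q => / ((w1 Q - w0 Q) * (w1 Q - w2 Q))).
Proof.
  intros Hz Hr G0 G1 G2. pose proof (halfplane_open z) as Hopen.
  apply continues_germ_of_near; [exact (halfplane_0 z Hz) | exact Hopen | |].
  - intros Q HQ. apply holo_at_inv; [now apply holo_at_dPz, w1_cont_holo | now apply dPz_w1_cont_neq_0].
  - eapply nearC_mono; [intros Q HQ; symmetry; exact HQ |].
    apply (H_germ_eq_inv_dPz z rho w0 w1 w2 _ Hz Hr G0 G1 G2).
    + exact (w1_cont_cont z Hz 0 (halfplane_0 z Hz)).
    + exact (w1_cont_at_0 z Hz).
    + apply (nearC_mono 0 (halfplane z)); [intros Q HQ | exact (Hopen 0 (halfplane_0 z Hz))].
      exact (w1_cont_root z Hz Q (proj1 HQ)).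
Qed.

Theorem lemma2p2 :
  exists delta : R, (0 < delta)%R /\
  forall z : C, Cdisc (RtoC (1 / 2)) delta z ->
  forall (rho : R) (w0 w1 w2 : C -> C),
    (0 < rho)%R ->
    root_germ z rho 0 w0 -> root_germ z rho 1 w1 -> root_germ z rho z w2 ->
    let H := fun Q : C => / ((w1 Q - w0 Q) * (w1 Q - w2 Q)) in
    (* H is regular at Q_-(z): it continues analytically along the straight
       segment [0, Q_-(z)] to a neighbourhood of Q_-(z). *)
    (exists (U : C -> Prop) (F : C -> C),
        Cconvex U /\ continues_germ U F H /\ U (Q_minus z)) /\
    (* H is singular at Q_+(z), with a two-branched (square-root type),
       integrable singularity: along [0, Q_+(z)), H continues analytically and
       near Q_+(z) equals A(Q) + B(Q) / (Q - Q_+(z))^(1/2) with A, B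
       holomorphic at Q_+(z) and B(Q_+(z)) <> 0. *)
    (exists (U : C -> Prop) (F : C -> C) (r : R) (A B s : C -> C),
        Cconvex U /\ continues_germ U F H /\
        (forall t : R, (0 <= t < 1)%R -> U (RtoC t * Q_plus z)) /\
        (0 < r)%R /\
        holo_on (Cdisc (Q_plus z) r) A /\ holo_on (Cdisc (Q_plus z) r) B /\
        B (Q_plus z) <> 0 /\
        (forall Q, U Q -> Cdisc (Q_plus z) r Q ->
           continuous s Q /\ s Q * s Q = Q - Q_plus z /\
           F Q = A Q + B Q / s Q)).
Proof.
  exists z_radius. split; [unfold z_radius; lra |].
  intros z Hz rho w0 w1 w2 Hr G0 G1 G2 H. split; [exact (H_regular_at_Q_minus z rho w0 w1 w2 Hz Hr G0 G1 G2) |].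
  exists (halfplane z), (fun Q => / dPz z (w1_cont z Q)), Qp_radius, (regular_part z), (singular_coef z), (sqrt_Q z).
  split; [exact (halfplane_convex z) |].
  split; [exact (H_singular_at_Q_plus z rho w0 w1 w2 Hz Hr G0 G1 G2) |].
  split; [exact (halfplane_segment z Hz) |].
  split; [unfold Qp_radius; lra |].
  split; [intros Q HQ; apply holo_at_ex_derive, (regular_part_holo z Hz), (Q_plus_nbhd_in_V0 z Hz), HQ |].
  split; [intros Q HQ; apply holo_at_ex_derive, (singular_coef_holo z Hz), (Q_plus_nbhd_in_V0 z Hz), HQ |].
  split; [exact (singular_coef_Q_plus_neq_0 z Hz) |].
  intros Q HQ _. split; [| split].
  - now apply cont_at_continuous, sqrt_Q_cont.
  - exact (sqrt_Q_sq z Hz Q).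
  - now apply inv_dPz_w1_cont_expansion.
Qed.
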